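(* Assume (A1), (A3) and the additivity condition (Add). Define $\hat f(x,\alpha):=f(x,0)+\sum_{i=1}^m\alpha_i\big(f(x,\mathbf 1_i)-f(x,0)\big)$ and $\hat r(x,\alpha):=r(x,0)+\sum_{i=1}^m\alpha_i\big(r(x,\mathbf 1_i)-r(x,0)\big)$ for $x\in\mathbb R^n$, $\alpha\in\mathbb R^m$, and the reformulated payoff $\hat J(\alpha):=\int_0^T\hat r(y^\alpha(t),\alpha)dt+q(y^\alpha(T))$, where $y^\alpha$ solves $\dot y(t)=\hat f(y(t),\alpha)$, $y(0)=\mathbf x$. If $\hat J$ is concave on $[0,1]^m$, then for every $\bar\alpha\in\{0,1\}^m$, $$D^{NS}J(\bar\alpha)^\top(\alpha-\bar\alpha)\ge J(\alpha)-J(\bar\alpha)\quad\text{for all }\alpha\in\{0,1\}^m.$$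
   Context: Fix $n,m\ge1$, $T>0$, $\mathcal X\subseteq\mathbb R^n$, $\mathbf x\in\mathcal X$, $f:\mathbb R^n\times\mathbb R^m\to\mathbb R^n$, $r:\mathbb R^n\times\mathbb R^m\to\mathbb R$, $q:\mathbb R^n\to\mathbb R$. For $\beta\in\{0,1\}^m$, $x^\beta$ solves $\dot x=f(x,\beta)$, $x(0)=\mathbf x$ on $[0,T]$ (solutions assumed to exist uniquely); $\mathcal J(z,\beta)=\int_0^T r(z(t),\beta)dt+q(z(T))$, $J(\beta)=\mathcal J(x^\beta,\beta)$. $\mathbf 1_i$ is the $i$-th standard basis vector of $\mathbb R^m$. (A1): for each $\alpha\in\{0,1\}^m$, $f(\cdot,\alpha)$ is $C^2$ and globally Lipschitz on $\mathcal X$. (A3): for each $\alpha\in\{0,1\}^m$, $r(\cdot,\alpha)$ and $q$ are continuously differentiable. (Add): for all $x\in\mathcal X$ and $\alpha\in\{0,1\}^m$, $f(x,\alpha)=f(x,0)+\sum_{i=1}^m\big(f(x,\alpha_i\mathbf 1_i)-f(x,0)\big)$ and $r(x,\alpha)=r(x,0)+\sum_{i=1}^m\big(r(x,\alpha_i\mathbf 1_i)-r(x,0)\big)$. Nonstandard derivative: for $\bar\alpha,\alpha\in\{0,1\}^m$, $\epsilon\in[0,1]$, let $x^{\epsilon(\bar\alpha,\alpha)}$ solve $\dot x=(1-\epsilon)f(x,\bar\alpha)+\epsilon f(x,\alpha)$, $x(0)=\mathbf x$, and $\mathcal J^{\epsilon(\bar\alpha,\alpha)}(z)=(1-\epsilon)\mathcal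 J(z,\bar\alpha)+\epsilon\mathcal J(z,\alpha)$. Then $[D^{NS}J(\bar\alpha)]_i=\lim_{\epsilon\to0^+}\frac1\epsilon[\mathcal J^{\epsilon(\bar\alpha,\bar\alpha+\mathbf 1_i)}(x^{\epsilon(\bar\alpha,\bar\alpha+\mathbf 1_i)})-\mathcal J(x^{\bar\alpha},\bar\alpha)]$ if $\bar\alpha_i=0$, and $\lim_{\epsilon\to0^+}\frac1\epsilon[\mathcal J(x^{\bar\alpha},\bar\alpha)-\mathcal J^{\epsilon(\bar\alpha,\bar\alpha-\mathbf 1_i)}(x^{\epsilon(\bar\alpha,\bar\alpha-\mathbf 1_i)})]$ if $\bar\alpha_i=1$. *)

From Stdlib Require Import Reals.
From mathcomp Require Import ssreflect ssrfun ssrbool eqtype ssrnat fintype bigop.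

Set Implicit Arguments.
Unset Strict Implicit.

Local Open Scope R_scope.

Definition vec (n : nat) := 'I_n -> R.

Definition vzero (n : nat) : vec n := fun _ => 0.
Arguments vzero n _ : clear implicits.
Definition unitv (n : nat) (i : 'I_n) : vec n := fun k => if k == i then 1 else 0.
Definition scal_unit (n : nat) (i : 'I_n) (a : R) : vec n :=
  fun k => if k == i then a else 0.
Definition vadd (n : nat) (u v : vec n) : vec n := fun k => u k + v k.
Definition vsub (n : nat) (u v : vec n) : vec n := fun k => u k - v k.
Definition vscale (n : nat) (a : R) (u : vec n) : vec n := fun k => a * u k.
Definition sumI (m : nat) (F : 'I_m -> R) : R := \big[Rplus/0]_(i < m) F i.
Definition dotv (m : nat) (u v : vec m) : R := sumI (fun i => u i * v i).

Definition is_binary (m : nat) (a : vec m) : Prop := forall i, a i = 0 \/ a i = 1.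
Definition in_box (m : nat) (a : vec m) : Prop := forall i, 0 <= a i <= 1.

Definition cont_Rn (n : nat) (g : vec n -> R) : Prop :=
  forall x eps, 0 < eps -> exists delta, 0 < delta /\
    forall y, (forall k, Rabs (y k - x k) < delta) -> Rabs (g y - g x) < eps.

Definition has_partial (n : nat) (g : vec n -> R) (x : vec n) (j : 'I_n) (l : R) : Prop :=
  derivable_pt_lim (fun h => g (vadd x (scal_unit j h))) 0 l.

Definition C1_Rn (n : nat) (g : vec n -> R) : Prop :=
  exists dg : 'I_n -> vec n -> R,
    (forall j x, has_partial g x j (dg j x)) /\ (forall j, cont_Rn (dg j)).

Definition C2_Rn (n : nat) (g : vec n -> R) : Prop :=
  exists dg : 'I_n -> vec n -> R,
    (forall j x, has_partial g x j (dg j x)) /\ (forall j, C1_Rn (dg j)).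

Definition C2v_Rn (n : nat) (F : vec n -> vec n) : Prop := forall k, C2_Rn (fun x => F x k).

Definition lipschitz_on (n : nat) (X : vec n -> Prop) (F : vec n -> vec n) : Prop :=
  exists L, 0 <= L /\ forall x y, X x -> X y -> forall d,
    (forall k, Rabs (x k - y k) <= d) -> forall k, Rabs (F x k - F y k) <= L * d.

Definition deriv_within (T : R) (g : R -> R) (t v : R) : Prop :=
  forall eps, 0 < eps -> exists delta, 0 < delta /\
    forall s, 0 <= s <= T -> s <> t -> Rabs (s - t) < delta ->
      Rabs ((g s - g t) / (s - t) - v) < eps.

Definition solves (n : nat) (X : vec n -> Prop) (T : R) (x0 : vec n)
    (F : vec n -> vec n) (z : R -> vec n) : Prop :=
  z 0 = x0 /\
  forall t, 0 <= t <= T ->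
    X (z t) /\ forall k, deriv_within T (fun s => z s k) t (F (z t) k).

Definition ex_uniq_sol (n : nat) (X : vec n -> Prop) (T : R) (x0 : vec n)
    (F : vec n -> vec n) : Prop :=
  (exists z, solves X T x0 F z) /\
  forall z1 z2, solves X T x0 F z1 -> solves X T x0 F z2 ->
    forall t, 0 <= t <= T -> forall k, z1 t k = z2 t k.

Definition is_RInt (g : R -> R) (a b v : R) : Prop :=
  exists pr : Riemann_integrable g a b, RiemannInt pr = v.

Definition calJ (n m : nat) (T : R) (r : vec n -> vec m -> R) (q : vec n -> R)
    (z : R -> vec n) (a : vec m) (v : R) : Prop :=
  exists I, is_RInt (fun t => r (z t) a) 0 T I /\ v = I + q (z T).

Definition Jval (n m : nat) (X : vec n -> Prop) (T : R) (x0 : vec n)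
    (f : vec n -> vec m -> vec n) (r : vec n -> vec m -> R) (q : vec n -> R)
    (b : vec m) (v : R) : Prop :=
  exists z, solves X T x0 (fun y => f y b) z /\ calJ T r q z b v.

Definition fmix (n m : nat) (f : vec n -> vec m -> vec n) (ab a : vec m) (eps : R) :
    vec n -> vec n :=
  fun y k => (1 - eps) * f y ab k + eps * f y a k.

Definition Jeps (n m : nat) (X : vec n -> Prop) (T : R) (x0 : vec n)
    (f : vec n -> vec m -> vec n) (r : vec n -> vec m -> R) (q : vec n -> R)
    (ab a : vec m) (eps : R) (v : R) : Prop :=
  exists z, solves X T x0 (fmix f ab a eps) z /\
    exists c1 c2, calJ T r q z ab c1 /\ calJ T r q z a c2 /\
      v = (1 - eps) * c1 + eps * c2.

Definition DNS_comp (n m : nat) (X : vec n -> Prop) (T : R) (x0 : vec n)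
    (f : vec n -> vec m -> vec n) (r : vec n -> vec m -> R) (q : vec n -> R)
    (ab : vec m) (i : 'I_m) (d : R) : Prop :=
  (ab i = 0 ->
    forall eta, 0 < eta -> exists delta, 0 < delta /\
      forall eps, 0 < eps -> eps <= 1 -> eps < delta ->
        forall ve v0, Jeps X T x0 f r q ab (vadd ab (unitv i)) eps ve ->
          Jval X T x0 f r q ab v0 ->
          Rabs ((ve - v0) / eps - d) < eta) /\
  (ab i = 1 ->
    forall eta, 0 < eta -> exists delta, 0 < delta /\
      forall eps, 0 < eps -> eps <= 1 -> eps < delta ->
        forall ve v0, Jeps X T x0 f r q ab (vsub ab (unitv i)) eps ve ->
          Jval X T x0 f r q ab v0 ->
          Rabs ((v0 - ve) / eps - d) < eta).

Definition fhat (n m : nat) (f : vec n -> vec m -> vec n) (x : vec n) (a : vec m) : vec n :=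
  fun k => f x (vzero m) k + sumI (fun i => a i * (f x (unitv i) k - f x (vzero m) k)).
Definition rhat (n m : nat) (r : vec n -> vec m -> R) (x : vec n) (a : vec m) : R :=
  r x (vzero m) + sumI (fun i => a i * (r x (unitv i) - r x (vzero m))).

Definition Jhat (n m : nat) (X : vec n -> Prop) (T : R) (x0 : vec n)
    (f : vec n -> vec m -> vec n) (r : vec n -> vec m -> R) (q : vec n -> R)
    (a : vec m) (v : R) : Prop :=
  exists y, solves X T x0 (fun z => fhat f z a) y /\
    exists I, is_RInt (fun t => rhat r (y t) a) 0 T I /\ v = I + q (y T).

Definition Jhat_concave (n m : nat) (X : vec n -> Prop) (T : R) (x0 : vec n)
    (f : vec n -> vec m -> vec n) (r : vec n -> vec m -> R) (q : vec n -> R) : Prop :=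
  forall a b lam, in_box a -> in_box b -> 0 <= lam <= 1 ->
    forall va vb vc,
      Jhat X T x0 f r q a va -> Jhat X T x0 f r q b vb ->
      Jhat X T x0 f r q (vadd (vscale lam a) (vscale (1 - lam) b)) vc ->
      lam * va + (1 - lam) * vb <= vc.

(** Under (Add), for binary controls the dynamics and the running cost coincide with
    their affine interpolations, so J = Ĵ on {0,1}^m; moreover the ε-mixed problems in the
    definition of D^NS J are exactly the reformulated problem on the segment from ᾱ to the
    neighbouring vertex ᾱ ± 1_i.  Hence [D^NS J(ᾱ)]_i is the one-sided derivative of Ĵ at ᾱ
    in the direction ±1_i.  Since Ĵ is concave, its difference quotients along a segment
    decrease with the step, so one-sided directional derivatives exist and dominate
    Ĵ(α) − Ĵ(ᾱ) in the direction α − ᾱ.  Finally the directional derivative of Ĵ is additive: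
    by Gronwall's inequality the trajectories depend Lipschitz-continuously on the control
    and their second differences in the control are o(ε), and the same then holds for the
    payoff.  Writing α − ᾱ as a sum of coordinate steps gives the supergradient inequality. *)

From HB Require Import structures.
From Stdlib Require Import Reals Lra Psatz ClassicalEpsilon FunctionalExtensionality Classical.
From mathcomp Require Import ssreflect ssrfun ssrbool eqtype ssrnat fintype bigop.

Set Implicit Arguments.
Unset Strict Implicit.

Local Open Scope R_scope.

HB.instance Definition _ :=
  Monoid.isComLaw.Build R 0%R Rplus (fun a b c => esym (Rplus_assoc a b c)) Rplus_comm Rplus_0_l.

Lemma Rabs_le_between x y : Rabs x <= y -> - y <= x <= y.
Proof. move=> H; split_Rabs; lra. Qed.

Lemma pos_min3 x y z : 0 < x -> 0 < y -> 0 < z -> exists h, 0 < h /\ h <= x /\ h <= y /\ h <= z.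
Proof.
move=> Hx Hy Hz. exists (Rmin x (Rmin y z)).
have := Rmin_l x (Rmin y z). have := Rmin_r x (Rmin y z). have := Rmin_l y z. have := Rmin_r y z.
have : 0 < Rmin x (Rmin y z) by apply: Rmin_glb_lt => //; apply: Rmin_glb_lt.
move=> *; repeat split; lra.
Qed.

Lemma Rmult_le_of_le_div h x c : 0 < c -> h <= x / c -> h * c <= x.
Proof.
move=> Hc H; apply: (Rle_trans _ (x / c * c)); first by apply: Rmult_le_compat_r; lra.
by right; field; lra.
Qed.

Lemma Rmult_div_succ_lt x y : 0 <= x -> 0 < y -> x * (y / (x + 1)) < y.
Proof.
move=> Hx Hy; rewrite (_ : x * (y / (x + 1)) = y - y / (x + 1)); last by field; lra.
have : 0 < y / (x + 1) by apply: Rdiv_lt_0_compat; lra.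
lra.
Qed.

(** * Finite sums and the l1 norm *)

Lemma sumI_ext m (F G : 'I_m -> R) : (forall i, F i = G i) -> sumI F = sumI G.
Proof. move=> H; rewrite /sumI; apply: eq_bigr => i _; apply: H. Qed.

Lemma sumI_add m (F G : 'I_m -> R) : sumI (fun i => F i + G i) = sumI F + sumI G.
Proof. by rewrite /sumI big_split. Qed.

Lemma sumI_scal m c (F : 'I_m -> R) : sumI (fun i => c * F i) = c * sumI F.
Proof.
rewrite /sumI. apply: (big_ind2 (fun x y => x = c * y)).
- ring.
- move=> x1 x2 y1 y2 -> ->; ring.
- by [].
Qed.

Lemma sumI0 m : sumI (fun _ : 'I_m => 0) = 0.
Proof. rewrite /sumI; apply: big1 => //. Qed.

Lemma sumI_sub m (F G : 'I_m -> R) : sumI (fun i => F i - G i) = sumI F - sumI G.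
Proof.
have -> : sumI (fun i => F i - G i) = sumI (fun i => F i + (-1) * G i)
  by apply: sumI_ext => i; ring.
rewrite sumI_add sumI_scal; ring.
Qed.

Lemma sumI_le m (F G : 'I_m -> R) : (forall i, F i <= G i) -> sumI F <= sumI G.
Proof.
move=> H; rewrite /sumI. apply: (big_ind2 (fun x y => x <= y)).
- lra.
- move=> x1 x2 y1 y2 ? ?; lra.
- move=> i _; apply: H.
Qed.

Lemma sumI_ge0 m (F : 'I_m -> R) : (forall i, 0 <= F i) -> 0 <= sumI F.
Proof. move=> H; rewrite -(sumI0 m); apply: sumI_le => i; apply: H. Qed.

Lemma sumI_abs_le m (F : 'I_m -> R) : Rabs (sumI F) <= sumI (fun i => Rabs (F i)).
Proof.
rewrite /sumI. apply: (big_ind2 (fun x y => Rabs x <= y)).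
- rewrite Rabs_R0; lra.
- move=> x1 x2 y1 y2 ? ?. have := Rabs_triang x1 y1. lra.
- move=> i _; lra.
Qed.

Lemma sumI_ge_term m (F : 'I_m -> R) k : (forall i, 0 <= F i) -> F k <= sumI F.
Proof.
move=> H. rewrite /sumI (bigD1 k) //=.
match goal with |- _ <= _ + ?S => have : 0 <= S end.
  apply: (big_ind (fun x => 0 <= x)) => //; [lra | move=> x y ? ?; lra].
move=> ?; lra.
Qed.

Lemma sumI_delta m (k : 'I_m) c : sumI (fun i => if i == k then c else 0) = c.
Proof.
rewrite /sumI (bigD1 k) //= eqxx big1; first ring.
by move=> i /negbTE ->.
Qed.

Lemma sumI_prefix_step m (D : 'I_m -> R) (i0 : 'I_m) :
  sumI (fun i : 'I_m => if (i < i0.+1)%N then D i else 0) =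
  sumI (fun i : 'I_m => if (i < i0)%N then D i else 0) + D i0.
Proof.
rewrite -(sumI_delta i0 (D i0)) -sumI_add; apply: sumI_ext => i.
rewrite ltnS leq_eqVlt; case: (boolP (i == i0)) => [/eqP -> | Hne].
  by rewrite eqxx ltnn /=; ring.
have -> : (nat_of_ord i == i0) = false.
  by apply/negbTE; apply: contra Hne => /eqP E; apply/eqP/val_inj.
by rewrite /=; ring.
Qed.

Lemma sumI_const m c : sumI (fun _ : 'I_m => c) = INR m * c.
Proof.
rewrite /sumI big_const_ord. elim: m => [|m IH] /=; first ring.
rewrite IH; case: m {IH} => [|m] /=; ring.
Qed.

Lemma sumI_telescope (N : nat) (G : nat -> R) :
  \big[Rplus/0]_(i < N) (G i.+1 - G i) = G N - G O.
Proof.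
elim: N => [|N IH]; first by rewrite big_ord0; ring.
rewrite big_ord_recr /= IH; ring.
Qed.

Lemma Rabs_sumI_lt m (F : 'I_m -> R) eps :
  0 < eps -> (forall i, Rabs (F i) < eps / (INR m + 1)) -> Rabs (sumI F) < eps.
Proof.
move=> Heps HF; apply: Rle_lt_trans (sumI_abs_le _) _.
apply: (Rle_lt_trans _ (sumI (fun _ : 'I_m => eps / (INR m + 1)))).
  by apply: sumI_le => i; left.
by rewrite sumI_const; apply: Rmult_div_succ_lt => //; exact: pos_INR.
Qed.

Definition norm1 n (u : vec n) : R := sumI (fun k => Rabs (u k)).

Lemma norm1_ge0 n (u : vec n) : 0 <= norm1 u.
Proof. apply: sumI_ge0 => i; apply: Rabs_pos. Qed.

Lemma Rabs_le_norm1 n (u : vec n) k : Rabs (u k) <= norm1 u.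
Proof. apply: (@sumI_ge_term n (fun k => Rabs (u k)) k) => i; apply: Rabs_pos. Qed.

Lemma norm1_le_const n (u : vec n) c : (forall k, Rabs (u k) <= c) -> norm1 u <= INR n * c.
Proof. move=> H; rewrite -sumI_const; apply: sumI_le; apply: H. Qed.

Lemma norm1_triang n (u v : vec n) : norm1 (fun k => u k + v k) <= norm1 u + norm1 v.
Proof. rewrite /norm1 -sumI_add; apply: sumI_le => i; apply: Rabs_triang. Qed.

Lemma norm1_ext n (u v : vec n) : (forall k, u k = v k) -> norm1 u = norm1 v.
Proof. move=> H; apply: sumI_ext => i; by rewrite H. Qed.

Lemma norm1_scal n c (u : vec n) : norm1 (fun k => c * u k) = Rabs c * norm1 u.
Proof. rewrite /norm1 -sumI_scal; apply: sumI_ext => i; apply: Rabs_mult. Qed.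

Lemma norm1_opp n (u : vec n) : norm1 (fun k => - u k) = norm1 u.
Proof. apply: sumI_ext => i; apply: Rabs_Ropp. Qed.

Lemma norm1_sub_triang n (y1 y2 y0 : vec n) :
  norm1 (fun k => y1 k - y2 k) <= norm1 (fun k => y1 k - y0 k) + norm1 (fun k => y2 k - y0 k).
Proof.
rewrite (norm1_ext (v := fun k => (y1 k - y0 k) + - (y2 k - y0 k))); last by move=> k; ring.
apply: Rle_trans (norm1_triang _ _) _. rewrite (norm1_opp (fun k => y2 k - y0 k)). lra.
Qed.

Lemma Rabs_norm1_sub_le n (x y : vec n) : Rabs (norm1 x - norm1 y) <= norm1 (fun k => x k - y k).
Proof.
rewrite /norm1 -sumI_sub. apply: Rle_trans (sumI_abs_le _) _.
apply: sumI_le => i. apply: Rabs_triang_inv2.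
Qed.

Lemma norm1_dir m (a u : vec m) e : 0 <= e -> norm1 (fun i => (a i + e * u i) - a i) = e * norm1 u.
Proof.
move=> He. rewrite (norm1_ext (v := fun i => e * u i)); last by move=> i; ring.
rewrite norm1_scal Rabs_right //; lra.
Qed.

Lemma Rabs_sumI_le_norm1 m (F : 'I_m -> R) (x : vec m) c :
  (forall i, Rabs (F i) <= c * Rabs (x i)) -> Rabs (sumI F) <= c * norm1 x.
Proof.
move=> H. apply: Rle_trans (sumI_abs_le _) _. rewrite /norm1 -sumI_scal.
by apply: sumI_le.
Qed.

Definition close n (r : R) (x y : vec n) := forall k, Rabs (x k - y k) <= r.

Lemma close_of_norm1 n (x y : vec n) rho : norm1 (fun k => x k - y k) <= rho -> close rho x y.
Proof. move=> H k. apply: Rle_trans (Rabs_le_norm1 (fun k => x k - y k) k) H. Qed.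

Lemma close_refl n (x : vec n) rho : 0 <= rho -> close rho x x.
Proof. move=> H k. rewrite Rminus_diag Rabs_R0 //. Qed.

Lemma finite_pos_min m (F : 'I_m -> R) : (forall k, 0 < F k) -> exists d, 0 < d /\ forall k, d <= F k.
Proof.
move=> H. set S := sumI (fun k => / F k).
have HS : 0 <= S by apply: sumI_ge0 => k; have := H k => ?; left; apply: Rinv_0_lt_compat.
exists (/ (1 + S)); split; first by apply: Rinv_0_lt_compat; lra.
move=> k. have Hk := H k.
have Hle : / F k <= S by apply: (@sumI_ge_term m (fun k => / F k) k) => i; have := H i => ?; left; apply: Rinv_0_lt_compat.
rewrite -(Rinv_inv (F k)). apply: Rinv_le_contravar; first by apply: Rinv_0_lt_compat.
lra.
Qed.

Lemma finite_uniform_pos m (P : 'I_m -> R -> Prop) :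
  (forall k d d', P k d -> 0 < d' <= d -> P k d') ->
  (forall k, exists d, 0 < d /\ P k d) -> exists d, 0 < d /\ forall k, P k d.
Proof.
move=> Hm H.
pose F := fun k => proj1_sig (constructive_indefinite_description _ (H k)).
have HF : forall k, 0 < F k /\ P k (F k).
  move=> k; rewrite /F; case: (constructive_indefinite_description _ _) => //=.
have [d [Hd Hd2]] := @finite_pos_min m F (fun k => proj1 (HF k)).
exists d; split => // k. apply: (Hm k (F k)); first exact: proj2 (HF k).
split => //.
Qed.

Lemma finite_uniform_bound m (P : 'I_m -> R -> Prop) :
  (forall k M M', P k M -> M <= M' -> P k M') ->
  (forall k, exists M, P k M) -> exists M, 0 <= M /\ forall k, P k M.
Proof.
move=> Hm H.
pose F := fun k => proj1_sig (constructive_indefinite_description _ (H k)).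
have HF : forall k, P k (F k).
  move=> k; rewrite /F; case: (constructive_indefinite_description _ _) => //=.
exists (sumI (fun k => Rabs (F k))); split; first by apply: sumI_ge0 => k; apply: Rabs_pos.
move=> k. apply: (Hm k (F k)) => //.
apply: Rle_trans (Rle_abs _) _. apply: (@sumI_ge_term m (fun k => Rabs (F k)) k) => i; apply: Rabs_pos.
Qed.

Lemma finite_uniform_pos2 N m (P : 'I_N -> 'I_m -> R -> Prop) :
  (forall i k d d', P i k d -> 0 < d' <= d -> P i k d') ->
  (forall i k, exists d, 0 < d /\ P i k d) -> exists d, 0 < d /\ forall i k, P i k d.
Proof.
move=> Hm H.
apply: (finite_uniform_pos (P := fun i d => forall k, P i k d)).
  by move=> i d d' Hd Hdd' k; exact: Hm (Hd k) Hdd'.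
move=> i; exact: finite_uniform_pos (Hm i) (H i).
Qed.

Lemma finite_uniform_bound2 N m (P : 'I_N -> 'I_m -> R -> Prop) :
  (forall i k M M', P i k M -> M <= M' -> P i k M') ->
  (forall i k, exists M, P i k M) -> exists M, 0 <= M /\ forall i k, P i k M.
Proof.
move=> Hm H.
apply: (finite_uniform_bound (P := fun i M => forall k, P i k M)).
  by move=> i M M' HM HMM' k; exact: Hm (HM k) HMM'.
move=> i; have [M [_ HM]] := finite_uniform_bound (Hm i) (H i).
by exists M.
Qed.

Lemma lub_approx (E : R -> Prop) s r : is_lub E s -> r < s -> exists x, E x /\ r < x.
Proof.
move=> [Hub Hl] Hr. apply: NNPP => Hn.
have : s <= r.
  apply: Hl => x Ex. apply: Rnot_lt_le => Hx. apply: Hn; exists x; split => //.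
lra.
Qed.

Lemma local_to_global_interval (T : R) (Q : R -> R -> Prop) : 0 <= T ->
  (forall t d d', Q t d -> 0 < d' <= d -> Q t d') ->
  (forall t0, 0 <= t0 <= T -> exists rho d, 0 < rho /\ 0 < d /\
     forall t, 0 <= t <= T -> Rabs (t - t0) < rho -> Q t d) ->
  exists d, 0 < d /\ forall t, 0 <= t <= T -> Q t d.
Proof.
move=> HT Hmon Hloc.
pose E := fun s => 0 <= s <= T /\ exists d, 0 < d /\ forall t, 0 <= t <= s -> Q t d.
have E0 : E 0.
  split; first lra.
  have [rho [d [Hr [Hd H]]]] := Hloc 0 (conj (Rle_refl 0) HT).
  exists d; split => // t Ht. apply: H; first lra.
  have -> : t - 0 = 0 by lra. rewrite Rabs_R0; lra.
have Hb : bound E by exists T => x [[? ?] _].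
have [s Hs] := completeness E Hb (ex_intro _ 0 E0).
have Hs0 : 0 <= s by apply: (proj1 Hs).
have HsT : s <= T by apply: (proj2 Hs) => x [[? ?] _].
have [rho1 [d1 [Hr1 [Hd1 Hl1]]]] := Hloc s (conj Hs0 HsT).
have [x [[Hx [d0 [Hd0 Hx0]]] Hxs]] := lub_approx Hs (r := s - rho1) ltac:(lra).
have Es' : E (Rmin T (s + rho1/2)).
  split. split; [apply: Rmin_glb; lra | apply: Rmin_l].
  exists (Rmin d0 d1); split; first by apply: Rmin_glb_lt.
  move=> t Ht.
  have HtT : t <= T by have := Rmin_l T (s + rho1/2); lra.
  have Hts : t <= s + rho1/2 by have := Rmin_r T (s + rho1/2); lra.
  case: (Rle_lt_dec t x) => Htx.
  - apply: (Hmon t d0); first by apply: Hx0; lra.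
    split; [apply: Rmin_glb_lt => // | apply: Rmin_l].
  - apply: (Hmon t d1); last by split; [apply: Rmin_glb_lt => // | apply: Rmin_r].
    apply: Hl1; first lra. apply: Rabs_def1; lra.
have Hle : Rmin T (s + rho1/2) <= s by apply: (proj1 Hs).
have HTs : T <= s.
  apply: Rnot_lt_le => HTs. move: Hle; rewrite /Rmin; case: Rle_dec; lra.
have -> : T = Rmin T (s + rho1/2) by rewrite /Rmin; case: Rle_dec; lra.
case: Es' => _ [d [Hd H]]. exists d; split => //.
Qed.

(** * Derivatives within [0,T] and Gronwall's inequality *)

Lemma deriv_within_approx T g t v : deriv_within T g t v -> forall z, 0 < z ->
  exists d, 0 < d /\ forall s, 0 <= s <= T -> Rabs (s - t) < d ->
    Rabs (g s - g t - v * (s - t)) <= z * Rabs (s - t).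
Proof.
move=> H z Hz. have [d [Hd Hd2]] := H z Hz. exists d; split => // s Hs Hst.
case: (Req_dec s t) => Heq.
  subst; have -> : g t - g t - v * (t - t) = 0 by ring. rewrite Rabs_R0 Rminus_diag Rabs_R0; lra.
have Hne : s - t <> 0 by lra.
have := Hd2 s Hs Heq Hst.
have -> : g s - g t - v * (s - t) = ((g s - g t) / (s - t) - v) * (s - t) by field.
rewrite Rabs_mult => ?. apply: Rmult_le_compat_r; [apply: Rabs_pos | lra].
Qed.

Lemma deriv_within_norm1_approx n T (D : R -> vec n) t (v : vec n) :
  (forall k, deriv_within T (fun s => D s k) t (v k)) -> forall z, 0 < z ->
  exists d, 0 < d /\ forall s, 0 <= s <= T -> Rabs (s - t) < d ->
    norm1 (fun k => D s k - D t k - v k * (s - t)) <= INR n * (z * Rabs (s - t)).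
Proof.
move=> H z Hz.
have [d [Hd H2]] := finite_uniform_pos (P := fun k d => forall s, 0 <= s <= T -> Rabs (s - t) < d ->
    Rabs (D s k - D t k - v k * (s - t)) <= z * Rabs (s - t))
  ltac:(move=> k d d' Hk Hd' s Hs Hst; apply: Hk => //; lra)
  (fun k => deriv_within_approx (H k) Hz).
exists d; split => // s Hs Hst. apply: norm1_le_const => k. by apply: H2.
Qed.

Lemma deriv_within_norm1_lip n T (D : R -> vec n) t (v : vec n) :
  (forall k, deriv_within T (fun s => D s k) t (v k)) -> forall z, 0 < z ->
  exists d, 0 < d /\ forall s, 0 <= s <= T -> Rabs (s - t) < d ->
    Rabs (norm1 (D s) - norm1 (D t)) <= (norm1 v + INR n * z) * Rabs (s - t).
Proof.
move=> H z Hz. have [d [Hd H2]] := deriv_within_norm1_approx H Hz. exists d; split => // s Hs Hst.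
apply: Rle_trans (Rabs_norm1_sub_le _ _) _.
have := H2 s Hs Hst.
have := norm1_triang (fun k => D s k - D t k - v k * (s - t)) (fun k => v k * (s - t)).
have -> : norm1 (fun k => v k * (s - t)) = Rabs (s - t) * norm1 v.
  rewrite -norm1_scal; apply: norm1_ext => k; ring.
have -> : norm1 (fun k => D s k - D t k - v k * (s - t) + v k * (s - t)) = norm1 (fun k => D s k - D t k)
  by apply: norm1_ext => k; ring.
nra.
Qed.

Lemma deriv_within_lin T g h t a b c : deriv_within T g t a -> deriv_within T h t b ->
  deriv_within T (fun s => g s + c * h s) t (a + c * b).
Proof.
move=> Hg Hh e He.
have Hc := Rabs_pos c.
set e' := e / 2 / (Rabs c + 1).
have He' : 0 < e' by apply: Rdiv_lt_0_compat; lra.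
have He'2 : e' <= e / 2.
  have : e' * (Rabs c + 1) = e / 2 by rewrite /e'; field; lra.
  nra.
have [d1 [Hd1 H1]] := Hg e' He'; have [d2 [Hd2 H2]] := Hh e' He'.
exists (Rmin d1 d2); split; first by apply: Rmin_glb_lt.
move=> s Hs Hst Hsd.
have A := H1 s Hs Hst (Rlt_le_trans _ _ _ Hsd (Rmin_l _ _)).
have B := H2 s Hs Hst (Rlt_le_trans _ _ _ Hsd (Rmin_r _ _)).
rewrite (_ : (g s + c * h s - (g t + c * h t)) / (s - t) - (a + c * b) =
    ((g s - g t) / (s - t) - a) + c * ((h s - h t) / (s - t) - b)); last by field; lra.
apply: Rle_lt_trans (Rabs_triang _ _) _; rewrite Rabs_mult.
have : Rabs c * Rabs ((h s - h t) / (s - t) - b) <= Rabs c * e' by apply: Rmult_le_compat_l; lra.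
have := Rmult_div_succ_lt Hc (ltac:(lra) : 0 < e / 2); rewrite -/e'; lra.
Qed.

Definition cont_path n T (p : R -> vec n) := forall t, 0 <= t <= T -> forall e, 0 < e ->
  exists d, 0 < d /\ forall s, 0 <= s <= T -> Rabs (s - t) < d -> forall k, Rabs (p s k - p t k) < e.

Lemma deriv_within_cont_path n T (p : R -> vec n) (v : R -> vec n) :
  (forall t, 0 <= t <= T -> forall k, deriv_within T (fun s => p s k) t (v t k)) -> cont_path T p.
Proof.
move=> H t Ht e He.
have Hk : forall k, exists d, 0 < d /\ forall s, 0 <= s <= T -> Rabs (s - t) < d ->
     Rabs (p s k - p t k) < e.
  move=> k. have [d1 [Hd1 H1]] := deriv_within_approx (H t Ht k) Rlt_0_1.
  have Hv := Rabs_pos (v t k).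
  exists (Rmin d1 (e / (Rabs (v t k) + 1 + 1))); split.
    apply: Rmin_glb_lt => //; apply: Rdiv_lt_0_compat; lra.
  move=> s Hs Hst.
  have Hst1 : Rabs (s - t) < d1 by move: (Rmin_l d1 (e / (Rabs (v t k) + 1 + 1))) => ?; lra.
  have Hst2 : Rabs (s - t) < e / (Rabs (v t k) + 1 + 1) by move: (Rmin_r d1 (e / (Rabs (v t k) + 1 + 1))) => ?; lra.
  have H3 := H1 s Hs Hst1. rewrite Rmult_1_l in H3.
  have H4 : Rabs (p s k - p t k) <= (Rabs (v t k) + 1) * Rabs (s - t).
    have := Rabs_triang (p s k - p t k - v t k * (s - t)) (v t k * (s - t)).
    rewrite Rabs_mult. have -> : p s k - p t k - v t k * (s - t) + v t k * (s - t) = p s k - p t k by ring.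
    move=> ?; lra.
  have H5 : (Rabs (v t k) + 1) * Rabs (s - t) <= (Rabs (v t k) + 1) * (e / (Rabs (v t k) + 1 + 1)).
    apply: Rmult_le_compat_l; lra.
  have := Rmult_div_succ_lt (ltac:(lra) : 0 <= Rabs (v t k) + 1) He.
  lra.
have [d [Hd H2]] := finite_uniform_pos (P := fun k d => forall s, 0 <= s <= T -> Rabs (s - t) < d ->
     Rabs (p s k - p t k) < e)
  ltac:(move=> k d d' Hk' Hd' s Hs Hst; apply: Hk' => //; lra) Hk.
by exists d; split => // s Hs Hst k; apply: H2.
Qed.

Lemma cont_path_const n T (c : vec n) : cont_path T (fun _ => c).
Proof. move=> t Ht e He. exists 1; split; first lra. move=> s Hs Hst k. rewrite Rminus_diag Rabs_R0 //. Qed.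

Lemma solves_deriv n (X : vec n -> Prop) T x0 F y : solves X T x0 F y ->
  forall t, 0 <= t <= T -> forall k, deriv_within T (fun s => y s k) t (F (y t) k).
Proof. move=> [_ H] t Ht k; exact: (proj2 (H t Ht) k). Qed.

Lemma solves_X n (X : vec n -> Prop) T x0 F y : solves X T x0 F y ->
  forall t, 0 <= t <= T -> X (y t).
Proof. move=> [_ H] t Ht; exact: (proj1 (H t Ht)). Qed.

Lemma solves_ext n (X : vec n -> Prop) T x0 (F G : vec n -> vec n) z :
  (forall y, X y -> forall k, F y k = G y k) -> solves X T x0 F z -> solves X T x0 G z.
Proof.
move=> HFG [H0 H]. split => // t Ht. have [HX Hd] := H t Ht. split => // k.
rewrite -HFG //.
Qed.

Lemma exp_le x y : x <= y -> exp x <= exp y.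
Proof. case => [H|->]; [left; apply: exp_increasing | right] => //. Qed.

Lemma exp_sub1_le h : 0 <= h -> exp h - 1 <= h * exp h.
Proof.
move=> Hh. have H1 := exp_ineq1_le (- h).
have H2 : exp h * exp (- h) = 1 by rewrite -exp_plus Rplus_opp_r exp_0.
have := exp_pos h. nra.
Qed.

(* For g > 0 a strict supersolution of e' = K e + b, e(0) = a; letting g -> 0 gives
   Gronwall's bound. *)
Definition gronwall_profile a b K g x := (a + g + (b + g) * x) * exp (K * x).

Lemma gronwall_profile_increment a b K T g s t :
  0 <= a -> 0 <= b -> 0 <= K -> 0 < g -> 0 <= s -> s <= t -> t <= T ->
  (t - s) * (b + g + K * gronwall_profile a b K g s)
    <= gronwall_profile a b K g t - gronwall_profile a b K g s /\
  gronwall_profile a b K g t - gronwall_profile a b K g s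
    <= (t - s) * ((b + g + K * (a + g + (b + g) * T)) * exp (K * T)).
Proof.
move=> Ha Hb HK Hg Hs Hst HtT. rewrite /gronwall_profile.
set P := a + g + (b + g) * s. set h := t - s.
have HP : 0 <= P by rewrite /P; nra.
have Hh : 0 <= h by rewrite /h; lra.
have Et : exp (K * t) = exp (K * s) * exp (K * h) by rewrite -exp_plus /h; f_equal; ring.
have Ht : a + g + (b + g) * t = P + (b + g) * h by rewrite /P /h; ring.
rewrite Et Ht.
have Es1 : 1 <= exp (K * s) by have := exp_ineq1_le (K * s); nra.
have Eh1 : 1 + K * h <= exp (K * h) by apply: exp_ineq1_le.
have Eh2 : exp (K * h) - 1 <= K * h * exp (K * h) by apply: exp_sub1_le; nra.
have EsP := exp_pos (K * s). have EhP := exp_pos (K * h).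
have ET : exp (K * s) * exp (K * h) <= exp (K * T) by rewrite -Et; apply: exp_le; nra.
have HPT : P <= a + g + (b + g) * T by rewrite /P; nra.
split.
- have : (P + (b + g) * h) * (exp (K * s) * exp (K * h)) - P * exp (K * s)
     = P * exp (K * s) * (exp (K * h) - 1) + (b + g) * h * (exp (K * s) * exp (K * h)) by ring.
  move=> ->.
  have : P * exp (K * s) * (K * h) <= P * exp (K * s) * (exp (K * h) - 1).
    apply: Rmult_le_compat_l; nra.
  have : (b + g) * h <= (b + g) * h * (exp (K * s) * exp (K * h)).
    have ? : 1 <= exp (K * s) * exp (K * h) by nra.
    rewrite -{1}(Rmult_1_r ((b + g) * h)); apply: Rmult_le_compat_l => //; nra.
  move=> ? ?; nra.
- have : (P + (b + g) * h) * (exp (K * s) * exp (K * h)) - P * exp (K * s)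
     = P * exp (K * s) * (exp (K * h) - 1) + (b + g) * h * (exp (K * s) * exp (K * h)) by ring.
  move=> ->.
  have : P * exp (K * s) * (exp (K * h) - 1) <= P * exp (K * s) * (K * h * exp (K * h)).
    apply: Rmult_le_compat_l; nra.
  have : h * K * P * (exp (K * s) * exp (K * h)) <= h * K * (a + g + (b + g) * T) * exp (K * T).
    have ? : 0 <= h * K by nra.
    apply: Rmult_le_compat; [nra | nra | | exact ET].
    apply: Rmult_le_compat_l => //.
  have : (b + g) * h * (exp (K * s) * exp (K * h)) <= (b + g) * h * exp (K * T).
    apply: Rmult_le_compat_l; nra.
  move=> ? ? ?; nra.
Qed.

Lemma gronwall_profile_lipschitz a b K T g s t : 0 <= a -> 0 <= b -> 0 <= K -> 0 < g ->
  0 <= s <= T -> 0 <= t <= T ->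
  Rabs (gronwall_profile a b K g t - gronwall_profile a b K g s) <=
    (b + g + K * (a + g + (b + g) * T)) * exp (K * T) * Rabs (t - s).
Proof.
move=> Ha Hb HK Hg Hs Ht.
have Hpos : forall x, 0 <= x -> 0 <= gronwall_profile a b K g x.
  by move=> x Hx; apply: Rmult_le_pos; [nra | left; apply: exp_pos].
wlog Hst : s t Hs Ht / s <= t.
  move=> Hw; case: (Rle_lt_dec s t) => Hst; first exact: Hw.
  by rewrite Rabs_minus_sym (Rabs_minus_sym t); apply: Hw => //; lra.
have [H1 H2] := gronwall_profile_increment (T := T) Ha Hb HK Hg (proj1 Hs) Hst (proj2 Ht).
have : 0 <= (t - s) * (b + g + K * gronwall_profile a b K g s).
  by apply: Rmult_le_pos; [lra | have := Hpos s (proj1 Hs); nra].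
by move=> H3; rewrite !Rabs_right; lra.
Qed.

Section GronwallStrict.

Variables (n : nat) (T : R) (D G : R -> vec n) (K a b g : R).
Hypotheses (HT : 0 <= T) (HK : 0 <= K) (Ha : 0 <= a) (Hb : 0 <= b) (Hg : 0 < g).
Hypothesis HD : forall t, 0 <= t <= T -> forall k, deriv_within T (fun s => D s k) t (G t k).
Hypothesis HG : forall t, 0 <= t <= T -> norm1 (G t) <= K * norm1 (D t) + b.
Hypothesis HD0 : norm1 (D 0) <= a.

Local Notation B := (gronwall_profile a b K g).
Local Notation Cp := ((b + g + K * (a + g + (b + g) * T)) * exp (K * T)).

Lemma profile_lipschitz_const_ge0 : 0 <= Cp.
Proof.
apply: Rmult_le_pos; last by left; apply: exp_pos.
have : 0 <= K * (a + g + (b + g) * T) by apply: Rmult_le_pos => //; nra.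
lra.
Qed.

Lemma gronwall_profile0 : B 0 = a + g.
Proof. by rewrite /gronwall_profile !Rmult_0_r exp_0; ring. Qed.

Lemma norm1_local_lipschitz t : 0 <= t <= T ->
  exists d, 0 < d /\ forall s, 0 <= s <= T -> Rabs (s - t) < d ->
    Rabs (norm1 (D s) - norm1 (D t)) <= (norm1 (G t) + INR n) * Rabs (s - t).
Proof.
move=> Ht; have [d [Hd H]] := deriv_within_norm1_lip (HD Ht) Rlt_0_1.
by exists d; split => // s Hs Hst; rewrite -(Rmult_1_r (INR n)); exact: H.
Qed.

Section AtTheSupremum.

Variable s : R.
Hypothesis Hs : is_lub (fun x => 0 <= x <= T /\ forall t, 0 <= t <= x -> norm1 (D t) < B t) s.

Lemma sup_in_interval : 0 <= s <= T.
Proof.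
split; last by apply: (proj2 Hs) => x [[_ ?] _].
apply: (proj1 Hs); split; first lra.
move=> t Ht; rewrite (_ : t = 0); last lra.
by rewrite gronwall_profile0; lra.
Qed.

Lemma below_profile_before_sup t : 0 <= t < s -> norm1 (D t) < B t.
Proof.
move=> Ht; have [x [[_ Hx] Htx]] := lub_approx Hs (r := t) ltac:(lra); apply: Hx; lra.
Qed.

Lemma not_above_profile_at_sup : norm1 (D s) <= B s.
Proof.
have [Hs0 HsT] := sup_in_interval.
apply: Rnot_lt_le => Hgt.
have Hs0' : 0 < s.
  by case: Hs0 => // Hs0; move: Hgt HD0; rewrite -Hs0 gronwall_profile0; lra.
have [d [Hd Hl]] := norm1_local_lipschitz (conj Hs0 HsT).
set C := norm1 (G s) + INR n.
have HC : 0 <= C by rewrite /C; move: (norm1_ge0 (G s)) (pos_INR n) => ? ?; lra.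
have HCp := profile_lipschitz_const_ge0.
set gap := norm1 (D s) - B s.
have [h [Hh [Hh1 [Hh2 Hh3]]]] := @pos_min3 (d/2) (s/2) (gap / (2 * (C + Cp + 1)))
  ltac:(lra) ltac:(lra) ltac:(apply: Rdiv_lt_0_compat; rewrite /gap; lra).
have Hgap : h * (2 * (C + Cp + 1)) <= gap.
  by apply: Rmult_le_of_le_div; lra.
have Habs : Rabs (s - h - s) = h by rewrite Rabs_left1; lra.
have H1 := Hl (s - h) ltac:(lra) ltac:(rewrite Habs; lra); rewrite Habs in H1.
have H2 := gronwall_profile_lipschitz (T := T) (t := s) (s := s - h) Ha Hb HK Hg ltac:(lra) ltac:(lra).
have Eh : Rabs (s - (s - h)) = h by rewrite Rabs_right; lra.
rewrite Eh in H2.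
have H3 := below_profile_before_sup (t := s - h) ltac:(lra).
move: H1 H2 => /Rabs_le_between H1 /Rabs_le_between H2.
have : C * h + Cp * h < gap by nra.
rewrite /gap /C in Hgap *; lra.
Qed.

Lemma not_touching_profile_at_sup : norm1 (D s) <> B s.
Proof.
have [Hs0 HsT] := sup_in_interval.
move=> Heq.
have Hs0' : 0 < s.
  by case: Hs0 => // Hs0; move: Heq HD0; rewrite -Hs0 gronwall_profile0; lra.
have Hn := pos_INR n.
set z := g / 2 / (INR n + 1).
have Hz : 0 < z by apply: Rdiv_lt_0_compat; lra.
have Hnz : INR n * z <= g / 2 by left; apply: Rmult_div_succ_lt; lra.
have [d [Hd Hl]] := deriv_within_norm1_lip (HD (conj Hs0 HsT)) Hz.
have HCp := profile_lipschitz_const_ge0.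
have HKC : 0 <= K * Cp by apply: Rmult_le_pos.
have [h [Hh [Hh1 [Hh2 Hh3]]]] := @pos_min3 (d/2) (s/2) (g / (4 * (K * Cp + 1)))
  ltac:(lra) ltac:(lra) ltac:(apply: Rdiv_lt_0_compat; lra).
have Hhg : h * (4 * (K * Cp + 1)) <= g.
  by apply: Rmult_le_of_le_div; lra.
have Habs : Rabs (s - h - s) = h by rewrite Rabs_left1; lra.
have H1 := Hl (s - h) ltac:(lra) ltac:(rewrite Habs; lra); rewrite Habs in H1.
have H2 := gronwall_profile_lipschitz (T := T) (t := s) (s := s - h) Ha Hb HK Hg ltac:(lra) ltac:(lra).
have Eh : Rabs (s - (s - h)) = h by rewrite Rabs_right; lra.
rewrite Eh in H2.
have H3 := below_profile_before_sup (t := s - h) ltac:(lra).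
have [H4 _] := gronwall_profile_increment (T := T) Ha Hb HK Hg (s := s - h) (t := s)
  ltac:(lra) ltac:(lra) HsT.
rewrite (_ : s - (s - h) = h) in H4; last ring.
have H5 := HG (conj Hs0 HsT).
move: H1 H2 => /Rabs_le_between H1 /Rabs_le_between H2.
have H6 : (norm1 (G s) + INR n * z) * h <= (K * norm1 (D s) + b + g / 2) * h.
  by apply: Rmult_le_compat_r; lra.
have H7 : b + g + K * B (s - h) < K * B s + b + g / 2.
  by apply: (Rmult_lt_reg_l h) => //; rewrite -Heq; lra.
have H8 : K * (B s - B (s - h)) <= K * (Cp * h) by apply: Rmult_le_compat_l; lra.
nra.
Qed.

Lemma sup_eq_T : s = T.
Proof.
have [Hs0 HsT] := sup_in_interval.
have Hlt : norm1 (D s) < B s.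
  by have := not_above_profile_at_sup; have := not_touching_profile_at_sup; lra.
apply: Rle_antisym => //; apply: Rnot_lt_le => HsT'.
have [d [Hd Hl]] := norm1_local_lipschitz (conj Hs0 HsT).
set C := norm1 (G s) + INR n.
have HC : 0 <= C by rewrite /C; move: (norm1_ge0 (G s)) (pos_INR n) => ? ?; lra.
have HCp := profile_lipschitz_const_ge0.
set gap := B s - norm1 (D s).
have [h [Hh [Hh1 [Hh2 Hh3]]]] := @pos_min3 (d/2) (T - s) (gap / (2 * (C + Cp + 1)))
  ltac:(lra) ltac:(lra) ltac:(apply: Rdiv_lt_0_compat; rewrite /gap; lra).
have Hgap : h * (2 * (C + Cp + 1)) <= gap.
  by apply: Rmult_le_of_le_div; lra.
suff : s + h <= s by lra.
apply: (proj1 Hs); split; first lra.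
move=> t Ht; case: (Rlt_le_dec t s) => Hts; first by apply: below_profile_before_sup; lra.
have Habs : Rabs (t - s) <= h by rewrite Rabs_right; lra.
have H1 := Hl t ltac:(lra) ltac:(lra).
have H2 := gronwall_profile_lipschitz (T := T) (t := t) (s := s) Ha Hb HK Hg ltac:(lra) ltac:(lra).
move: H1 H2 => /Rabs_le_between H1 /Rabs_le_between H2.
have : C * Rabs (t - s) <= C * h by apply: Rmult_le_compat_l.
have : Cp * Rabs (t - s) <= Cp * h by apply: Rmult_le_compat_l.
have : 0 <= C * h by apply: Rmult_le_pos; lra.
have : 0 <= Cp * h by apply: Rmult_le_pos; lra.
rewrite /gap /C in Hgap *; lra.
Qed.

End AtTheSupremum.

Lemma gronwall_strict t : 0 <= t <= T -> norm1 (D t) < B t.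
Proof.
pose E x := 0 <= x <= T /\ forall t, 0 <= t <= x -> norm1 (D t) < B t.
have E0 : E 0.
  split; first lra.
  move=> u Hu; rewrite (_ : u = 0); last lra.
  by rewrite gronwall_profile0; lra.
have [s Hs] := completeness E (ex_intro _ T (fun x Ex => proj2 (proj1 Ex))) (ex_intro _ 0 E0).
move=> Ht; case: (Rlt_le_dec t s) => Hts.
  by apply: (below_profile_before_sup Hs); lra.
rewrite (_ : t = s); last by have := sup_eq_T Hs; lra.
by have := not_above_profile_at_sup Hs; have := not_touching_profile_at_sup Hs; lra.
Qed.

End GronwallStrict.

Lemma gronwall n T (D G : R -> vec n) K a b :
  0 <= T -> 0 <= K -> 0 <= a -> 0 <= b ->
  (forall t, 0 <= t <= T -> forall k, deriv_within T (fun s => D s k) t (G t k)) ->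
  (forall t, 0 <= t <= T -> norm1 (G t) <= K * norm1 (D t) + b) ->
  norm1 (D 0) <= a ->
  forall t, 0 <= t <= T -> norm1 (D t) <= (a + b * T) * exp (K * T).
Proof.
move=> HT HK Ha Hb Hd HG H0 t Ht.
set x := norm1 (D t). set y := (a + b * T) * exp (K * T).
set c := (1 + T) * exp (K * T).
have Hc : 0 < c by rewrite /c; apply: Rmult_lt_0_compat; [lra | apply: exp_pos].
have Hall : forall g, 0 < g -> x <= y + g * c.
  move=> g Hg. have H1 := gronwall_strict HT HK Ha Hb Hg Hd HG H0 Ht.
  have E1 : exp (K * t) <= exp (K * T) by apply: exp_le; nra.
  have E2 := exp_pos (K * t).
  have H2 : (a + g + (b + g) * t) * exp (K * t) <= (a + g + (b + g) * T) * exp (K * T).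
    apply: Rmult_le_compat; nra.
  rewrite /y /c. rewrite /gronwall_profile -/x in H1.
  have -> : (a + b * T) * exp (K * T) + g * ((1 + T) * exp (K * T)) = (a + g + (b + g) * T) * exp (K * T) by ring.
  lra.
apply: Rnot_lt_le => Hlt.
have H := Hall ((x - y) / (2 * c)) ltac:(apply: Rdiv_lt_0_compat; lra).
have E : (x - y) / (2 * c) * c = (x - y) / 2 by field; lra.
lra.
Qed.

(** * C1 functions on R^n *)

Lemma derivable_pt_lim_shift f c l : derivable_pt_lim (fun h => f (c + h)) 0 l -> derivable_pt_lim f c l.
Proof.
move=> H eps Heps. have [d Hd] := H eps Heps. exists d => h Hh Hhd.
have := Hd h Hh Hhd. by rewrite Rplus_0_l Rplus_0_r.
Qed.

Lemma has_partial_along n (g : vec n -> R) (dg : 'I_n -> vec n -> R) :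
  (forall j x, has_partial g x j (dg j x)) ->
  forall (S : vec n) j c, derivable_pt_lim (fun c => g (vadd S (scal_unit j c))) c
                             (dg j (vadd S (scal_unit j c))).
Proof.
move=> H S j c. apply: derivable_pt_lim_shift.
have E : (fun h => g (vadd S (scal_unit j (c + h)))) =
         (fun h => g (vadd (vadd S (scal_unit j c)) (scal_unit j h))).
  apply: functional_extensionality => h. f_equal. apply: functional_extensionality => i.
  rewrite /vadd /scal_unit. case: (i == j); ring.
rewrite E. apply: H.
Qed.

Lemma MVT_signed (psi psi' : R -> R) : (forall c, derivable_pt_lim psi c (psi' c)) ->
  forall h, exists c, (0 <= c <= h \/ h <= c <= 0) /\ psi h - psi 0 = psi' c * h.
Proof.
move=> H h. case: (Rtotal_order 0 h) => [Hh|[Hh|Hh]].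
- have [c [E Hc]] := MVT_cor2 psi psi' _ _ Hh (fun c _ => H c).
  exists c; split; [left; lra | rewrite E; ring].
- subst. exists 0; split; [left; lra | ring].
- have [c [E Hc]] := MVT_cor2 psi psi' _ _ Hh (fun c _ => H c).
  exists c; split; [right; lra |]. have : psi 0 - psi h = psi' c * (0 - h) by [].
  move=> E'. lra.
Qed.

(* Telescoping along [stair x z k], k = 0..n, reduces C1 estimates to the one-variable
   mean value theorem. *)
Definition stair n (x z : vec n) (k : nat) : vec n := fun i => if (i < k)%N then z i else x i.

Lemma stair_step n (x z : vec n) (k : 'I_n) :
  stair x z k.+1 = vadd (stair x z k) (scal_unit k (z k - x k)).
Proof.
apply: functional_extensionality => i. rewrite /stair /vadd /scal_unit.
case: (ltngtP i k) => Hik.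
- have -> : (i < k.+1)%N by apply: ltnW; rewrite ltnS.
  have -> : (i == k) = false by apply/negbTE; rewrite neq_ltn Hik.
  ring.
- have -> : (i < k.+1)%N = false by apply/negbTE; rewrite -leqNgt.
  have -> : (i == k) = false by apply/negbTE; rewrite neq_ltn Hik orbT.
  ring.
- have Eik : i = k by apply: val_inj.
  subst. rewrite ltnSn eqxx. ring.
Qed.

Lemma C1_linearization_error n (g : vec n -> R) (dg : 'I_n -> vec n -> R) (p x z : vec n) rho eta :
  (forall j y, has_partial g y j (dg j y)) ->
  (forall xi, close rho xi p -> forall j, Rabs (dg j xi - dg j p) <= eta) ->
  close rho x p -> close rho z p ->
  Rabs (g z - g x - sumI (fun j => dg j p * (z j - x j))) <= eta * norm1 (fun j => z j - x j).
Proof.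
move=> Hp Hc Hx Hz.
have Etel : g z - g x = sumI (fun k : 'I_n => g (stair x z k.+1) - g (stair x z k)).
  rewrite /sumI (sumI_telescope n (fun k => g (stair x z k))).
  have -> : stair x z n = z by apply: functional_extensionality => i; rewrite /stair ltn_ord.
  have -> : stair x z 0 = x by apply: functional_extensionality => i.
  done.
rewrite Etel -sumI_sub. apply: Rle_trans (sumI_abs_le _) _.
rewrite /norm1 -sumI_scal. apply: sumI_le => k.
set S := stair x z k.
have Hd := has_partial_along Hp S k.
have [c [Hcb Ec]] := MVT_signed Hd (z k - x k).
have E1 : vadd S (scal_unit k (z k - x k)) = stair x z k.+1 by rewrite stair_step.
have E0 : vadd S (scal_unit k 0) = S.
  apply: functional_extensionality => i; rewrite /vadd /scal_unit; case: (i == k); ring.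
rewrite E1 E0 in Ec. rewrite Ec.
have Hxi : close rho (vadd S (scal_unit k c)) p.
  move=> i. rewrite /vadd /scal_unit /S /stair.
  have Hxi := Hx i. have Hzi := Hz i.
  case: eqP => [Hik|Hik].
  - subst. rewrite ltnn. move: (Hx k) (Hz k) => /Rabs_le_between ? /Rabs_le_between ?.
    apply: Rabs_le. lra.
  - rewrite Rplus_0_r. by case: (i < k)%N.
have := Hc _ Hxi k.
rewrite -Rmult_minus_distr_r Rabs_mult => ?.
apply: Rmult_le_compat_r => //; apply: Rabs_pos.
Qed.

Lemma C1_local_lipschitz n (g : vec n -> R) (dg : 'I_n -> vec n -> R) (p x z : vec n) rho eta M :
  (forall j y, has_partial g y j (dg j y)) ->
  (forall xi, close rho xi p -> forall j, Rabs (dg j xi - dg j p) <= eta) ->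
  (forall j, Rabs (dg j p) <= M) ->
  close rho x p -> close rho z p ->
  Rabs (g z - g x) <= (M + eta) * norm1 (fun j => z j - x j).
Proof.
move=> Hp Hc HM Hx Hz. have H1 := C1_linearization_error Hp Hc Hx Hz.
have H2 : Rabs (sumI (fun j => dg j p * (z j - x j))) <= M * norm1 (fun j => z j - x j).
  apply: Rabs_sumI_le_norm1 => j. rewrite Rabs_mult. apply: Rmult_le_compat_r; [apply: Rabs_pos | apply: HM].
have := Rabs_triang (g z - g x - sumI (fun j => dg j p * (z j - x j))) (sumI (fun j => dg j p * (z j - x j))).
have -> : g z - g x - sumI (fun j => dg j p * (z j - x j)) + sumI (fun j => dg j p * (z j - x j)) = g z - g x by ring.
move=> ?; lra.
Qed.

Lemma C1_second_difference n (g : vec n -> R) (dg : 'I_n -> vec n -> R) (p x1 x2 x3 : vec n) rho eta M :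
  0 <= eta ->
  (forall j y, has_partial g y j (dg j y)) ->
  (forall xi, close rho xi p -> forall j, Rabs (dg j xi - dg j p) <= eta) ->
  (forall j, Rabs (dg j p) <= M) ->
  close rho x1 p -> close rho x2 p -> close rho x3 p ->
  Rabs (g x1 - g x2 - g x3 + g p) <=
    (M + eta) * norm1 (fun j => x1 j - x2 j - x3 j + p j) + 2 * eta * norm1 (fun j => x2 j - p j).
Proof.
move=> Heta Hp Hc HM H1 H2 H3.
have Hpp : close rho p p by move=> k; rewrite Rminus_diag Rabs_R0; have := H1 k; move: (Rabs_pos (x1 k - p k)) => ?; lra.
have E1 := C1_linearization_error Hp Hc H3 H1.
have E2 := C1_linearization_error Hp Hc Hpp H2.
set L1 := sumI (fun j => dg j p * (x1 j - x3 j)).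
set L2 := sumI (fun j => dg j p * (x2 j - p j)).
rewrite -/L1 in E1. rewrite -/L2 in E2.
have EL : L1 - L2 = sumI (fun j => dg j p * (x1 j - x2 j - x3 j + p j)).
  rewrite /L1 /L2 -sumI_sub; apply: sumI_ext => j; ring.
have HL : Rabs (L1 - L2) <= M * norm1 (fun j => x1 j - x2 j - x3 j + p j).
  rewrite EL. apply: Rabs_sumI_le_norm1 => j. rewrite Rabs_mult. apply: Rmult_le_compat_r; [apply: Rabs_pos | apply: HM].
have Hn1 : norm1 (fun j => x1 j - x3 j) <= norm1 (fun j => x1 j - x2 j - x3 j + p j) + norm1 (fun j => x2 j - p j).
  rewrite -(norm1_ext (u := fun j => (x1 j - x2 j - x3 j + p j) + (x2 j - p j))); first by apply: norm1_triang.
  move=> j; ring.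
have T1 := Rabs_triang (g x1 - g x3 - L1) (- (g x2 - g p - L2)).
have T2 := Rabs_triang ((g x1 - g x3 - L1) + - (g x2 - g p - L2)) (L1 - L2).
rewrite Rabs_Ropp in T1.
have -> : g x1 - g x2 - g x3 + g p = (g x1 - g x3 - L1) + - (g x2 - g p - L2) + (L1 - L2) by ring.
have : eta * norm1 (fun j => x1 j - x3 j) <= eta * (norm1 (fun j => x1 j - x2 j - x3 j + p j) + norm1 (fun j => x2 j - p j))
  by apply: Rmult_le_compat_l.
move=> ?; lra.
Qed.

Lemma derivable_pt_lim_sumI m (F : 'I_m -> R -> R) x (l : 'I_m -> R) :
  (forall i, derivable_pt_lim (F i) x (l i)) ->
  derivable_pt_lim (fun h => sumI (fun i => F i h)) x (sumI l).
Proof.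
move=> H eps Heps.
have He' : 0 < eps / (INR m + 1) by apply: Rdiv_lt_0_compat; have := pos_INR m; lra.
have [d [Hd Hd2]] := finite_uniform_pos (P := fun i d => forall h, h <> 0 -> Rabs h < d ->
     Rabs ((F i (x + h) - F i x) / h - l i) < eps / (INR m + 1))
  ltac:(move=> i d d' Hi Hd' h Hh Hhd; apply: Hi => //; lra)
  ltac:(by move=> i; have [d Hd'] := H i _ He'; exists d; split; [exact: cond_pos | exact: Hd']).
exists (mkposreal d Hd) => h Hh Hhd /=.
rewrite (_ : _ - sumI l = sumI (fun i => (F i (x + h) - F i x) / h - l i)).
  by apply: Rabs_sumI_lt => // i; exact: Hd2.
rewrite sumI_sub; congr (_ - _).
by rewrite -sumI_sub /Rdiv Rmult_comm -sumI_scal; apply: sumI_ext => i; ring.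
Qed.

Lemma cont_Rn_sumI n m (F : 'I_m -> vec n -> R) :
  (forall i, cont_Rn (F i)) -> cont_Rn (fun y => sumI (fun i => F i y)).
Proof.
move=> H x eps Heps.
have He' : 0 < eps / (INR m + 1) by apply: Rdiv_lt_0_compat; have := pos_INR m; lra.
have [d [Hd Hd2]] := finite_uniform_pos (P := fun i d => forall y, (forall k, Rabs (y k - x k) < d) ->
     Rabs (F i y - F i x) < eps / (INR m + 1))
  ltac:(move=> i d d' Hi Hd' y Hy; apply: Hi => k; have := Hy k; lra)
  (fun i => H i x _ He').
exists d; split => // y Hy.
by rewrite -sumI_sub; apply: Rabs_sumI_lt => // i; exact: Hd2.
Qed.

Lemma cont_Rn_plus n (f g : vec n -> R) : cont_Rn f -> cont_Rn g -> cont_Rn (fun y => f y + g y).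
Proof.
move=> Hf Hg x eps Heps.
have [d1 [Hd1 H1]] := Hf x (eps/2) ltac:(lra).
have [d2 [Hd2 H2]] := Hg x (eps/2) ltac:(lra).
exists (Rmin d1 d2); split; first by apply: Rmin_glb_lt.
move=> y Hy.
have := H1 y (fun k => Rlt_le_trans _ _ _ (Hy k) (Rmin_l _ _)).
have := H2 y (fun k => Rlt_le_trans _ _ _ (Hy k) (Rmin_r _ _)).
move=> ? ?. have -> : f y + g y - (f x + g x) = (f y - f x) + (g y - g x) by ring.
have := Rabs_triang (f y - f x) (g y - g x). lra.
Qed.

Lemma cont_Rn_scal n c (f : vec n -> R) : cont_Rn f -> cont_Rn (fun y => c * f y).
Proof.
move=> Hf x eps Heps.
have Hc := Rabs_pos c.
have [d [Hd H]] := Hf x (eps / (Rabs c + 1)) ltac:(apply: Rdiv_lt_0_compat; lra).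
exists d; split => // y Hy.
rewrite -Rmult_minus_distr_l Rabs_mult.
apply: (Rle_lt_trans _ (Rabs c * (eps / (Rabs c + 1)))); last exact: Rmult_div_succ_lt.
by apply: Rmult_le_compat_l => //; left; apply: H.
Qed.

Lemma cont_Rn_minus n (f g : vec n -> R) : cont_Rn f -> cont_Rn g -> cont_Rn (fun y => f y - g y).
Proof.
move=> Hf Hg. have -> : (fun y => f y - g y) = (fun y => f y + (-1) * g y)
  by apply: functional_extensionality => y; ring.
apply: cont_Rn_plus => //; exact: cont_Rn_scal.
Qed.

Lemma cont_Rn_of_partials n (g : vec n -> R) dg :
  (forall j x, has_partial g x j (dg j x)) -> (forall j, cont_Rn (dg j)) -> cont_Rn g.
Proof.
move=> Hp Hc x eps Heps.
have [d0 [Hd0 H0]] := finite_uniform_pos (P := fun j d => forall y, (forall k, Rabs (y k - x k) < d) ->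
     Rabs (dg j y - dg j x) < 1)
  ltac:(move=> j d d' Hj Hd' y Hy; apply: Hj => k; have := Hy k; lra)
  (fun j => Hc j x 1 Rlt_0_1).
set M := sumI (fun j => Rabs (dg j x)).
have HM : forall j, Rabs (dg j x) <= M by move=> j; apply: (@sumI_ge_term n (fun j => Rabs (dg j x)) j) => i; apply: Rabs_pos.
have HM0 : 0 <= M by apply: sumI_ge0 => j; apply: Rabs_pos.
have Hn := pos_INR n.
have Hcl : forall xi, close (d0/2) xi x -> forall j, Rabs (dg j xi - dg j x) <= 1.
  move=> xi Hxi j; left; apply: H0 => k; move: (Hxi k) => ?; lra.
set c := (M + 1) * INR n.
have Hc0 : 0 <= c by apply: Rmult_le_pos; lra.
set d := Rmin (d0/2) (eps / (c + 1)).
have Hd : 0 < d by apply: Rmin_glb_lt; [lra | apply: Rdiv_lt_0_compat; lra].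
exists d; split => // y Hy.
have Hyc : close (d0/2) y x.
  by move=> k; move: (Hy k) (Rmin_l (d0/2) (eps / (c + 1))); rewrite -/d => ? ?; lra.
have H1 := C1_local_lipschitz Hp Hcl HM (close_refl x (ltac:(lra) : 0 <= d0 / 2)) Hyc.
have H2 : norm1 (fun j => y j - x j) <= INR n * d by apply: norm1_le_const => k; left; apply: Hy.
have H3 : c * d <= c * (eps / (c + 1)) by apply: Rmult_le_compat_l => //; exact: Rmin_r.
have := Rmult_div_succ_lt Hc0 Heps.
have : (M + 1) * norm1 (fun j => y j - x j) <= c * d.
  by rewrite /c Rmult_assoc; apply: Rmult_le_compat_l; lra.
lra.
Qed.

Lemma C2_Rn_C1 n (g : vec n -> R) : C2_Rn g -> C1_Rn g.
Proof.
move=> [dg [H1 H2]]. exists dg; split => // j.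
have [ddg [H3 H4]] := H2 j. exact: cont_Rn_of_partials H3 H4.
Qed.

Lemma C1_Rn_cont n (g : vec n -> R) : C1_Rn g -> cont_Rn g.
Proof. move=> [dg [H1 H2]]; exact: cont_Rn_of_partials H1 H2. Qed.

Lemma cont_unif_near_path n T (p : R -> vec n) (h : vec n -> R) : 0 <= T -> cont_Rn h -> cont_path T p ->
  forall eta, 0 < eta -> exists rho, 0 < rho /\ forall t, 0 <= t <= T -> forall xi,
    close rho xi (p t) -> Rabs (h xi - h (p t)) <= eta.
Proof.
move=> HT Hh Hp eta Heta.
apply: (local_to_global_interval (Q := fun t rho => forall xi, close rho xi (p t) -> Rabs (h xi - h (p t)) <= eta)) => //.
  move=> t d d' H Hd xi Hxi. apply: H => k; have := Hxi k; lra.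
move=> t0 Ht0.
have [d0 [Hd0 H0]] := Hh (p t0) (eta/2) ltac:(lra).
have [d1 [Hd1 H1]] := Hp t0 Ht0 (d0/2) ltac:(lra).
exists d1, (d0/4); split => //; split; first lra.
move=> t Ht Htt0 xi Hxi.
have Ha : Rabs (h xi - h (p t0)) < eta / 2.
  apply: H0 => k. have := Hxi k. have := H1 t Ht Htt0 k.
  have := Rabs_triang (xi k - p t k) (p t k - p t0 k).
  have -> : xi k - p t k + (p t k - p t0 k) = xi k - p t0 k by ring.
  move=> ? ? ?; lra.
have Hb : Rabs (h (p t) - h (p t0)) < eta / 2.
  apply: H0 => k. have := H1 t Ht Htt0 k. lra.
have := Rabs_triang (h xi - h (p t0)) (- (h (p t) - h (p t0))).
rewrite Rabs_Ropp.
have -> : h xi - h (p t0) + - (h (p t) - h (p t0)) = h xi - h (p t) by ring.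
move=> ?; lra.
Qed.

Lemma cont_bounded_on_path n T (p : R -> vec n) (h : vec n -> R) : 0 <= T -> cont_Rn h -> cont_path T p ->
  exists M, 0 <= M /\ forall t, 0 <= t <= T -> Rabs (h (p t)) <= M.
Proof.
move=> HT Hh Hp.
have [d [Hd H]] := local_to_global_interval (T := T) (Q := fun t d => Rabs (h (p t)) <= / d) HT
  ltac:(move=> t d d' H Hd; apply: Rle_trans H _; apply: Rinv_le_contravar; lra)
  ltac:(move=> t0 Ht0;
    have [d0 [Hd0 H0]] := Hh (p t0) 1 Rlt_0_1;
    have [d1 [Hd1 H1]] := Hp t0 Ht0 d0 Hd0;
    exists d1, (/ (Rabs (h (p t0)) + 1));
    split => //; split; [apply: Rinv_0_lt_compat; move: (Rabs_pos (h (p t0))) => ?; lra|];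
    move=> t Ht Htt0; rewrite Rinv_inv;
    have := H0 (p t) (H1 t Ht Htt0);
    have := Rabs_triang_inv (h (p t)) (h (p t0)); move=> ? ?; lra).
exists (/ d); split; [left; apply: Rinv_0_lt_compat | ] => //.
Qed.

Lemma C1_family_on_path N n T (p : R -> vec n) (g : 'I_N -> vec n -> R) :
  0 <= T -> cont_path T p -> (forall i, C1_Rn (g i)) ->
  exists dg : 'I_N -> 'I_n -> vec n -> R,
    (forall i j x, has_partial (g i) x j (dg i j x)) /\
    (exists M, 0 <= M /\ forall i j t, 0 <= t <= T -> Rabs (dg i j (p t)) <= M) /\
    (forall eta, 0 < eta -> exists rho, 0 < rho /\ forall i t, 0 <= t <= T -> forall xi,
        close rho xi (p t) -> forall j, Rabs (dg i j xi - dg i j (p t)) <= eta).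
Proof.
move=> HT Hp Hg.
pose dg i := proj1_sig (constructive_indefinite_description _ (Hg i)).
have Hdg : forall i, (forall j x, has_partial (g i) x j (dg i j x)) /\ (forall j, cont_Rn (dg i j)).
  by move=> i; rewrite /dg; case: constructive_indefinite_description.
exists dg; split; [|split].
- by move=> i j x; apply: (proj1 (Hdg i)).
- apply: (finite_uniform_bound2 (P := fun i j M => forall t, 0 <= t <= T -> Rabs (dg i j (p t)) <= M)).
    by move=> i j M M' H HMM t Ht; apply: Rle_trans (H t Ht) HMM.
  by move=> i j; have [M [_ HM]] := cont_bounded_on_path HT (proj2 (Hdg i) j) Hp; exists M.
- move=> eta Heta.
  have [rho [Hr H]] := finite_uniform_pos2 (P := fun i j rho => forall t, 0 <= t <= T -> forall xi,
      close rho xi (p t) -> Rabs (dg i j xi - dg i j (p t)) <= eta)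
    ltac:(move=> i j d d' H Hd t Ht xi Hxi; apply: H => // k; have := Hxi k; lra)
    (fun i j => cont_unif_near_path HT (proj2 (Hdg i) j) Hp Heta).
  by exists rho; split => // i t Ht xi Hxi j; exact: H.
Qed.

Lemma C1_family_lipschitz_near_path N n T (p : R -> vec n) (g : 'I_N -> vec n -> R) :
  0 <= T -> cont_path T p -> (forall i, C1_Rn (g i)) ->
  exists rho L, 0 < rho /\ 0 <= L /\ forall i t, 0 <= t <= T -> forall x z,
    close rho x (p t) -> close rho z (p t) -> Rabs (g i z - g i x) <= L * norm1 (fun j => z j - x j).
Proof.
move=> HT Hp Hg. have [dg [H1 [[M [HM HM2]] H3]]] := C1_family_on_path HT Hp Hg.
have [rho [Hr H4]] := H3 1 Rlt_0_1.
exists rho, (M + 1); split => //; split; first lra.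
move=> i t Ht x z Hx Hz. apply: (C1_local_lipschitz (H1 i) (H4 i t Ht)) => // j. exact: HM2.
Qed.

Lemma C1_family_second_difference_near_path N n T (p : R -> vec n) (g : 'I_N -> vec n -> R) :
  0 <= T -> cont_path T p -> (forall i, C1_Rn (g i)) ->
  exists M, 0 <= M /\ forall eta, 0 < eta -> exists rho, 0 < rho /\
    forall i t, 0 <= t <= T -> forall x1 x2 x3,
    close rho x1 (p t) -> close rho x2 (p t) -> close rho x3 (p t) ->
    Rabs (g i x1 - g i x2 - g i x3 + g i (p t)) <=
      (M + eta) * norm1 (fun j => x1 j - x2 j - x3 j + p t j) + 2 * eta * norm1 (fun j => x2 j - p t j).
Proof.
move=> HT Hp Hg. have [dg [H1 [[M [HM HM2]] H3]]] := C1_family_on_path HT Hp Hg.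
exists M; split => // eta Heta.
have [rho [Hr H4]] := H3 eta Heta.
exists rho; split => // i t Ht x1 x2 x3 Hx1 Hx2 Hx3.
exact: (C1_second_difference (ltac:(lra) : 0 <= eta) (H1 i) (H4 i t Ht) (fun j => HM2 i j t Ht) Hx1 Hx2 Hx3).
Qed.

(** * Riemann integrals on [0,T] *)

Lemma is_RInt_lin g h T I J l : 0 <= T -> is_RInt g 0 T I -> is_RInt h 0 T J ->
  is_RInt (fun t => g t + l * h t) 0 T (I + l * J).
Proof.
move=> HT [pr1 E1] [pr2 E2]. exists (RiemannInt_P10 l pr1 pr2).
rewrite (RiemannInt_P12 pr1 pr2) // E1 E2 //.
Qed.

Lemma is_RInt_ext g h T I : 0 <= T -> is_RInt g 0 T I -> (forall t, 0 <= t <= T -> g t = h t) ->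
  is_RInt h 0 T I.
Proof.
move=> HT [pr E] H.
have pr' : Riemann_integrable h 0 T.
  apply: (Riemann_integrable_ext h _ pr) => x. rewrite Rmin_left // Rmax_right //. apply: H.
exists pr'. rewrite -E. symmetry. apply: RiemannInt_P18 => // x Hx. apply: H; lra.
Qed.

Lemma is_RInt_unique g T I J : is_RInt g 0 T I -> is_RInt g 0 T J -> I = J.
Proof. move=> [pr1 <-] [pr2 <-]; apply: RiemannInt_P5. Qed.

Lemma is_RInt_bound g T I c : 0 <= T -> is_RInt g 0 T I -> (forall t, 0 <= t <= T -> Rabs (g t) <= c) ->
  Rabs I <= c * T.
Proof.
move=> HT [pr <-] H.
have pr2 := RiemannInt_P16 pr.
apply: Rle_trans (RiemannInt_P17 pr pr2 HT) _.
have pr3 := RiemannInt_P14 0 T c.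
apply: Rle_trans (RiemannInt_P19 pr2 pr3 HT _) _.
  move=> x Hx. rewrite /fct_cte. apply: H; lra.
rewrite RiemannInt_P15. lra.
Qed.

Definition clamp T t := Rmax 0 (Rmin T t).

Lemma clamp_in T t : 0 <= T -> 0 <= clamp T t <= T.
Proof. move=> HT; rewrite /clamp /Rmax /Rmin; repeat case: Rle_dec; lra. Qed.

Lemma clamp_id T t : 0 <= t <= T -> clamp T t = t.
Proof. move=> Ht; rewrite /clamp /Rmax /Rmin; repeat case: Rle_dec; lra. Qed.

Lemma clamp_lip T s t : 0 <= T -> Rabs (clamp T s - clamp T t) <= Rabs (s - t).
Proof. move=> HT; rewrite /clamp /Rmax /Rmin; repeat case: Rle_dec; split_Rabs; lra. Qed.

Definition cont_on T (g : R -> R) := forall t, 0 <= t <= T -> forall e, 0 < e ->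
  exists d, 0 < d /\ forall s, 0 <= s <= T -> Rabs (s - t) < d -> Rabs (g s - g t) < e.

Lemma is_RInt_cont_on g T : 0 <= T -> cont_on T g -> exists I, is_RInt g 0 T I.
Proof.
move=> HT Hg.
have pr : Riemann_integrable (fun t => g (clamp T t)) 0 T.
  apply: continuity_implies_RiemannInt => // x _.
  rewrite /continuity_pt /continue_in /limit1_in /limit_in /= /R_dist => e He.
  have [d [Hd H]] := Hg (clamp T x) (clamp_in x HT) e He.
  exists d; split => // x' [_ Hx'].
  apply: H; first exact: clamp_in. apply: Rle_lt_trans (clamp_lip _ _ HT) Hx'.
have pr' : Riemann_integrable g 0 T.
  apply: (Riemann_integrable_ext g _ pr) => x. rewrite Rmin_left // Rmax_right // => Hx.
  by rewrite clamp_id.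
by exists (RiemannInt pr'), pr'.
Qed.

Lemma cont_on_comp n T (h : vec n -> R) (p : R -> vec n) : cont_Rn h -> cont_path T p -> cont_on T (fun t => h (p t)).
Proof.
move=> Hh Hp t Ht e He. have [d0 [Hd0 H0]] := Hh (p t) e He.
have [d [Hd H]] := Hp t Ht d0 Hd0. exists d; split => // s Hs Hst. apply: H0 => k. exact: H.
Qed.

(** * Affine interpolation in the control *)

Definition affine_comb m n (g0 : vec n -> R) (g : 'I_m -> vec n -> R) (b : vec m) (y : vec n) : R :=
  g0 y + sumI (fun i => b i * (g i y - g0 y)).

Lemma C1_affine_comb m n (g0 : vec n -> R) (g : 'I_m -> vec n -> R) (b : vec m) :
  C1_Rn g0 -> (forall i, C1_Rn (g i)) -> C1_Rn (affine_comb g0 g b).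
Proof.
move=> [dg0 [H01 H02]] Hg.
pose dg := fun i => proj1_sig (constructive_indefinite_description _ (Hg i)).
have Hdg : forall i, (forall j x, has_partial (g i) x j (dg i j x)) /\ (forall j, cont_Rn (dg i j)).
  move=> i; rewrite /dg; case: (constructive_indefinite_description _ _) => //=.
exists (fun j y => dg0 j y + sumI (fun i => b i * (dg i j y - dg0 j y))); split.
- move=> j x. rewrite /has_partial /affine_comb.
  apply: (derivable_pt_lim_plus _ _ _ _ _ (H01 j x)).
  apply: (derivable_pt_lim_sumI (F := fun i h => b i * (g i (vadd x (scal_unit j h)) - g0 (vadd x (scal_unit j h))))) => i.
  apply: derivable_pt_lim_scal.
  exact: (derivable_pt_lim_minus _ _ _ _ _ (proj1 (Hdg i) j x) (H01 j x)).
- move=> j. apply: cont_Rn_plus => //. apply: (cont_Rn_sumI (F := fun i y => b i * (dg i j y - dg0 j y))) => i.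
  apply: cont_Rn_scal; apply: cont_Rn_minus; [exact: (proj2 (Hdg i)) | exact: H02].
Qed.

Lemma affine_comb_sub m n (g0 : vec n -> R) (g : 'I_m -> vec n -> R) b b' y :
  affine_comb g0 g b y - affine_comb g0 g b' y = sumI (fun i => (b i - b' i) * (g i y - g0 y)).
Proof.
rewrite /affine_comb. rewrite (_ : forall A B C, A + B - (A + C) = B - C); last by move=> *; ring.
rewrite -sumI_sub. apply: sumI_ext => i; ring.
Qed.

Lemma affine_comb_dir m n (g0 : vec n -> R) (g : 'I_m -> vec n -> R) (a x : vec m) e y :
  affine_comb g0 g (fun i => a i + e * x i) y =
  affine_comb g0 g a y + e * (affine_comb g0 g (fun i => a i + x i) y - affine_comb g0 g a y).
Proof.
rewrite -[LHS](Rplus_minus (affine_comb g0 g a y)) !affine_comb_sub -sumI_scal.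
by congr (_ + _); apply: sumI_ext => i; ring.
Qed.

Lemma affine_comb_dir2 m n (g0 : vec n -> R) (g : 'I_m -> vec n -> R) (a x z : vec m) e y :
  affine_comb g0 g (fun i => a i + e * (x i + z i)) y =
  affine_comb g0 g a y + e * ((affine_comb g0 g (fun i => a i + x i) y - affine_comb g0 g a y) +
                       (affine_comb g0 g (fun i => a i + z i) y - affine_comb g0 g a y)).
Proof.
rewrite (affine_comb_dir g0 g a (fun i => x i + z i)). f_equal. f_equal.
rewrite !affine_comb_sub -sumI_add. apply: sumI_ext => i; ring.
Qed.

Lemma affine_comb_mix m n (g0 : vec n -> R) (g : 'I_m -> vec n -> R) (a b : vec m) e y :
  affine_comb g0 g (fun k => (1 - e) * a k + e * b k) y =
  (1 - e) * affine_comb g0 g a y + e * affine_comb g0 g b y.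
Proof.
rewrite /affine_comb.
have -> : sumI (fun i => ((1 - e) * a i + e * b i) * (g i y - g0 y)) =
   sumI (fun i => (1 - e) * (a i * (g i y - g0 y)) + e * (b i * (g i y - g0 y))).
  apply: sumI_ext => i; ring.
rewrite sumI_add !sumI_scal. ring.
Qed.

Lemma affine_comb_lipschitz m n (g0 : vec n -> R) (g : 'I_m -> vec n -> R) b x y B :
  in_box b -> Rabs (g0 x - g0 y) <= B -> (forall i, Rabs (g i x - g i y) <= B) ->
  Rabs (affine_comb g0 g b x - affine_comb g0 g b y) <= (1 + 2 * INR m) * B.
Proof.
move=> Hb H0 Hi.
have HB : 0 <= B by move: (Rabs_pos (g0 x - g0 y)) => ?; lra.
have E : affine_comb g0 g b x - affine_comb g0 g b y =
  (g0 x - g0 y) + sumI (fun i => b i * ((g i x - g i y) - (g0 x - g0 y))).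
  rewrite /affine_comb. rewrite (_ : forall a c d e, a + c - (d + e) = (a - d) + (c - e)); last by move=> *; ring.
  f_equal. rewrite -sumI_sub. apply: sumI_ext => i; ring.
rewrite E. apply: Rle_trans (Rabs_triang _ _) _.
have : Rabs (sumI (fun i => b i * ((g i x - g i y) - (g0 x - g0 y)))) <= INR m * (2 * B).
  apply: Rle_trans (sumI_abs_le _) _. rewrite -sumI_const. apply: sumI_le => i.
  rewrite Rabs_mult. have [Hb1 Hb2] := Hb i.
  have : Rabs (g i x - g i y - (g0 x - g0 y)) <= 2 * B.
    apply: Rle_trans (Rabs_triang _ _) _. rewrite Rabs_Ropp. move: (Hi i) => ?; lra.
  move=> ?. rewrite (Rabs_right (b i)); last lra. have : b i * Rabs (g i x - g i y - (g0 x - g0 y)) <= 1 * (2 * B).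
    apply: Rmult_le_compat; [lra | apply: Rabs_pos | lra | lra].
  move=> ?; lra.
move=> ?; lra.
Qed.

Lemma affine_comb_sub_bound m n (g0 : vec n -> R) (g : 'I_m -> vec n -> R) b b' y Mg :
  (forall i, Rabs (g i y - g0 y) <= Mg) ->
  Rabs (affine_comb g0 g b y - affine_comb g0 g b' y) <= Mg * norm1 (fun i => b i - b' i).
Proof.
move=> H. rewrite affine_comb_sub. apply: Rabs_sumI_le_norm1 => i.
rewrite Rabs_mult Rmult_comm. apply: Rmult_le_compat_r; [apply: Rabs_pos | apply: H].
Qed.

Lemma Rabs_diff_sub_le a1 a2 u1 u2 L0 Lu d : Rabs (a1 - a2) <= L0 * d -> Rabs (u1 - u2) <= Lu * d ->
  Rabs ((u1 - a1) - (u2 - a2)) <= (L0 + Lu) * d.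
Proof.
move=> H1 H2. have -> : (u1 - a1) - (u2 - a2) = (u1 - u2) - (a1 - a2) by ring.
apply: Rle_trans (Rabs_triang _ _) _. rewrite Rabs_Ropp. lra.
Qed.

Lemma affine_comb_second_difference m n (g0 : vec n -> R) (g : 'I_m -> vec n -> R)
    (ab u w : vec m) e (y0 y1 y2 y3 : vec n) :
  let h b y := affine_comb g0 g b y in
  h (fun i => ab i + e * (u i + w i)) y1 - h (fun i => ab i + e * u i) y2
    - h (fun i => ab i + e * w i) y3 + h ab y0 =
  (h ab y1 - h ab y2 - h ab y3 + h ab y0)
  + e * (((h (fun i => ab i + u i) y1 - h ab y1) - (h (fun i => ab i + u i) y2 - h ab y2))
       + ((h (fun i => ab i + w i) y1 - h ab y1) - (h (fun i => ab i + w i) y3 - h ab y3))).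
Proof. by move=> h; rewrite /h affine_comb_dir2 !affine_comb_dir; ring. Qed.

Lemma affine_family_second_difference_near_path N n m T (p : R -> vec n)
    (g0 : 'I_N -> vec n -> R) (g : 'I_N -> 'I_m -> vec n -> R) (ab u w : vec m) :
  0 <= T -> cont_path T p -> (forall k, C1_Rn (g0 k)) -> (forall k i, C1_Rn (g k i)) ->
  exists M L, 0 <= M /\ 0 <= L /\ forall eta, 0 < eta -> exists rho, 0 < rho /\
    forall k t, 0 <= t <= T -> forall x1 x2 x3,
    close rho x1 (p t) -> close rho x2 (p t) -> close rho x3 (p t) -> forall e, 0 <= e ->
    Rabs (affine_comb (g0 k) (g k) (fun i => ab i + e * (u i + w i)) x1
          - affine_comb (g0 k) (g k) (fun i => ab i + e * u i) x2
          - affine_comb (g0 k) (g k) (fun i => ab i + e * w i) x3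
          + affine_comb (g0 k) (g k) ab (p t)) <=
      (M + eta) * norm1 (fun j => x1 j - x2 j - x3 j + p t j) + 2 * eta * norm1 (fun j => x2 j - p t j)
      + e * L * (norm1 (fun j => x1 j - x2 j) + norm1 (fun j => x1 j - x3 j)).
Proof.
move=> HT Hp Hg0 Hg.
have C1h : forall b k, C1_Rn (affine_comb (g0 k) (g k) b).
  by move=> b k; apply: C1_affine_comb.
have [M [HM HSD]] := C1_family_second_difference_near_path HT Hp (C1h ab).
have [r0 [L0 [Hr0 [HL0 LN0]]]] := C1_family_lipschitz_near_path HT Hp (C1h ab).
have [ru [Lu [Hru [HLu LNu]]]] := C1_family_lipschitz_near_path HT Hp (C1h (fun i => ab i + u i)).
have [rw [Lw [Hrw [HLw LNw]]]] := C1_family_lipschitz_near_path HT Hp (C1h (fun i => ab i + w i)).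
exists M, (2 * L0 + Lu + Lw); split => //; split; first lra.
move=> eta Heta; have [rs [Hrs HSD']] := HSD eta Heta.
have [rl [Hrl [Hrl0 [Hrlu Hrlw]]]] := pos_min3 Hr0 Hru Hrw.
have [rho [Hrho [Hrho1 [Hrho2 _]]]] := pos_min3 Hrs Hrl Rlt_0_1.
exists rho; split => // k t Ht x1 x2 x3 H1 H2 H3 e He.
have near : forall r', rho <= r' -> forall x, close rho x (p t) -> close r' x (p t).
  by move=> r' Hr x Hx j; have := Hx j; lra.
have Ns := near rs Hrho1; have N0 := near r0 ltac:(lra).
have Nu := near ru ltac:(lra); have Nw := near rw ltac:(lra).
rewrite affine_comb_second_difference.
have Hsd := HSD' k t Ht x1 x2 x3 (Ns _ H1) (Ns _ H2) (Ns _ H3).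
have D12 := Rabs_diff_sub_le (LN0 k t Ht x2 x1 (N0 _ H2) (N0 _ H1)) (LNu k t Ht x2 x1 (Nu _ H2) (Nu _ H1)).
have D13 := Rabs_diff_sub_le (LN0 k t Ht x3 x1 (N0 _ H3) (N0 _ H1)) (LNw k t Ht x3 x1 (Nw _ H3) (Nw _ H1)).
apply: Rle_trans (Rabs_triang _ _) _; rewrite Rabs_mult (Rabs_right e); last lra.
apply: Rplus_le_compat; first exact: Hsd.
rewrite Rmult_assoc; apply: Rmult_le_compat_l; first lra.
apply: Rle_trans (Rabs_triang _ _) _.
have := norm1_ge0 (fun j => x1 j - x2 j); have := norm1_ge0 (fun j => x1 j - x3 j).
nra.
Qed.

Lemma C1_rhat n m (r : vec n -> vec m -> R) b :
  C1_Rn (fun y => r y (vzero m)) -> (forall i, C1_Rn (fun y => r y (unitv i))) ->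
  C1_Rn (fun y => rhat r y b).
Proof. move=> H0 Hi. exact: (C1_affine_comb (g0 := fun y => r y (vzero m)) (g := fun i y => r y (unitv i))). Qed.

Lemma rhat_dir n m (r : vec n -> vec m -> R) y (a x : vec m) e :
  rhat r y (fun i => a i + e * x i) = rhat r y a + e * (rhat r y (fun i => a i + x i) - rhat r y a).
Proof. exact: (affine_comb_dir (fun y => r y (vzero m)) (fun i y => r y (unitv i))). Qed.

Lemma rhat_mix n m (r : vec n -> vec m -> R) (a b : vec m) e y :
  rhat r y (fun k => (1 - e) * a k + e * b k) = (1 - e) * rhat r y a + e * rhat r y b.
Proof. exact: (affine_comb_mix (fun y => r y (vzero m)) (fun i y => r y (unitv i)) a b e y). Qed.

Lemma fhat_mix n m (f : vec n -> vec m -> vec n) (a b : vec m) e y k :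
  fhat f y (fun k => (1 - e) * a k + e * b k) k = (1 - e) * fhat f y a k + e * fhat f y b k.
Proof. exact: (affine_comb_mix (fun y => f y (vzero m) k) (fun i y => f y (unitv i) k) a b e y). Qed.

(** * Binary controls *)

Definition f_additive n m (X : vec n -> Prop) (f : vec n -> vec m -> vec n) : Prop :=
  forall x a, X x -> is_binary a -> forall k,
    f x a k = f x (vzero m) k + sumI (fun i => f x (scal_unit i (a i)) k - f x (vzero m) k).

Definition r_additive n m (X : vec n -> Prop) (r : vec n -> vec m -> R) : Prop :=
  forall x a, X x -> is_binary a ->
    r x a = r x (vzero m) + sumI (fun i => r x (scal_unit i (a i)) - r x (vzero m)).

Lemma scal_unit0 m (i : 'I_m) : scal_unit i 0 = vzero m.
Proof. apply: functional_extensionality => k. rewrite /scal_unit /vzero. by case: (k == i). Qed.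

Lemma f_fhat_binary n m (X : vec n -> Prop) (f : vec n -> vec m -> vec n) x a :
  f_additive X f -> X x -> is_binary a -> forall k, f x a k = fhat f x a k.
Proof.
move=> HAddf Hx Ha k. rewrite HAddf // /fhat. f_equal. apply: sumI_ext => i.
case: (Ha i) => ->; first by rewrite scal_unit0; ring.
rewrite /unitv /scal_unit. ring.
Qed.

Lemma r_rhat_binary n m (X : vec n -> Prop) (r : vec n -> vec m -> R) x a :
  r_additive X r -> X x -> is_binary a -> r x a = rhat r x a.
Proof.
move=> HAddr Hx Ha. rewrite HAddr // /rhat. f_equal. apply: sumI_ext => i.
case: (Ha i) => ->; first by rewrite scal_unit0; ring.
rewrite /unitv /scal_unit. ring.
Qed.

Lemma Jval_Jhat n m T X x0 f r q a v :
  f_additive X f -> r_additive X r -> 0 <= T ->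
  is_binary a -> @Jval n m X T x0 f r q a v -> Jhat X T x0 f r q a v.
Proof.
move=> HAddf HAddr HT Ha [z [Hz [I [HI ->]]]]. exists z; split.
  apply: (solves_ext _ Hz) => y Hy k. exact: (f_fhat_binary HAddf Hy Ha).
exists I; split => //. apply: (is_RInt_ext HT HI) => t Ht.
exact: (r_rhat_binary HAddr (solves_X Hz Ht) Ha).
Qed.

Lemma Jeps_Jhat n m T X x0 f r q ab a eps v :
  f_additive X f -> r_additive X r -> 0 <= T ->
  is_binary ab -> is_binary a -> @Jeps n m X T x0 f r q ab a eps v ->
  Jhat X T x0 f r q (fun k => (1 - eps) * ab k + eps * a k) v.
Proof.
move=> HAddf HAddr HT Hab Ha [z [Hz [c1 [c2 [[I1 [HI1 ->]] [[I2 [HI2 ->]] ->]]]]]].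
exists z; split.
  apply: (solves_ext _ Hz) => y Hy k.
  by rewrite /fmix (f_fhat_binary HAddf Hy Hab) (f_fhat_binary HAddf Hy Ha) fhat_mix.
exists (I1 + eps * (I2 + -1 * I1)); split; last ring.
apply: (is_RInt_ext HT (is_RInt_lin eps HT HI1 (is_RInt_lin (-1) HT HI2 HI1))) => t Ht /=.
have Hx := solves_X Hz Ht.
rewrite (r_rhat_binary HAddr Hx Hab) (r_rhat_binary HAddr Hx Ha) rhat_mix. ring.
Qed.

Lemma binary_in_box m (a : vec m) : is_binary a -> in_box a.
Proof. by move=> Ha i; case: (Ha i) => ->; lra. Qed.

Lemma binary_vzero m : is_binary (vzero m).
Proof. by move=> i; left. Qed.

Lemma binary_unitv m (i : 'I_m) : is_binary (unitv i).
Proof. by move=> k; rewrite /unitv; case: (k == i); [right | left]. Qed.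

Lemma binary_flip m (ab : vec m) i :
  is_binary ab -> is_binary (fun k => ab k + scal_unit i (1 - 2 * ab i) k).
Proof.
move=> Hab k; rewrite /scal_unit; case: eqP => [->|_]; last by rewrite Rplus_0_r.
by case: (Hab i) => ->; [right | left]; ring.
Qed.

(** * Smooth dependence of the reformulated payoff on the control *)

Definition admissible m (ab u : vec m) := forall e, 0 <= e <= 1 -> in_box (fun i => ab i + e * u i).

Lemma admissible_of m (ab u : vec m) : in_box ab -> in_box (fun i => ab i + u i) -> admissible ab u.
Proof.
move=> H1 H2 e He i. have [A1 A2] := H1 i. have [B1 B2] := H2 i.
have -> : ab i + e * u i = (1 - e) * ab i + e * (ab i + u i) by ring.
split; nra.
Qed.

Lemma admissible_sub m (ab w z : vec m) :
  in_box ab -> in_box (fun i => ab i + w i) -> (forall i, z i = 0 \/ z i = w i) ->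
  admissible ab z.
Proof.
move=> Hab Hw Hz; apply: admissible_of => // i.
by case: (Hz i) => ->; [rewrite Rplus_0_r; exact: Hab | exact: Hw].
Qed.

Definition Jhat_along n m T (r : vec n -> vec m -> R) (q : vec n -> R) (b : vec m)
    (y : R -> vec n) (v : R) :=
  exists I, is_RInt (fun t => rhat r (y t) b) 0 T I /\ v = I + q (y T).

(* The hypotheses (A1), (A3) as far as the reformulated problem uses them:
   f^ and r^ only involve the controls 0 and 1_i. *)
Record regular_data n m T (X : vec n -> Prop) (x0 : vec n) (f : vec n -> vec m -> vec n)
  (r : vec n -> vec m -> R) (q : vec n -> R) : Prop := RegularData {
  T_gt0 : 0 < T;
  C1_f0 : forall k, C1_Rn (fun y : vec n => f y (vzero m) k);
  C1_fi : forall (i : 'I_m) k, C1_Rn (fun y : vec n => f y (unitv i) k);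
  lip_f0 : lipschitz_on X (fun y => f y (vzero m));
  lip_fi : forall i, lipschitz_on X (fun y => f y (unitv i));
  C1_r0 : C1_Rn (fun y => r y (vzero m));
  C1_ri : forall i, C1_Rn (fun y => r y (unitv i));
  C1_q : C1_Rn q;
  sol_hat : forall a, in_box a -> ex_uniq_sol X T x0 (fun y => fhat f y a) }.

Section AffineReformulation.

Variables (n m : nat) (T : R) (X : vec n -> Prop) (x0 : vec n).
Variables (f : vec n -> vec m -> vec n) (r : vec n -> vec m -> R) (q : vec n -> R).
Hypothesis Hreg : regular_data T X x0 f r q.

Local Notation Jh := (Jhat X T x0 f r q).
Local Notation sol b := (solves X T x0 (fun z => fhat f z b)).

Lemma fhat_lipschitz :
  exists L, 0 <= L /\ forall b, in_box b -> forall x y, X x -> X y -> forall k,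
    Rabs (fhat f x b k - fhat f y b k) <= L * norm1 (fun j => x j - y j).
Proof.
have [L0 [HL0 H0]] := lip_f0 Hreg.
have [Lm [HLm Hm]] : exists Lm, 0 <= Lm /\ forall i x y, X x -> X y -> forall d,
    (forall k, Rabs (x k - y k) <= d) -> forall k, Rabs (f x (unitv i) k - f y (unitv i) k) <= Lm * d.
  apply: finite_uniform_bound => [i L L' HL HLL x y Hx Hy d Hd k | i].
    apply: Rle_trans (HL x y Hx Hy d Hd k) _.
    by apply: Rmult_le_compat_r => //; apply: Rle_trans (Rabs_pos (x k - y k)) (Hd k).
  by have [L [_ HL]] := lip_fi Hreg i; exists L.
exists ((1 + 2 * INR m) * ((L0 + Lm) * 1)); split.
  apply: Rmult_le_pos; [move: (pos_INR m) => ?; lra | lra].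
move=> b Hb x y Hx Hy k.
have Hd : forall k, Rabs (x k - y k) <= norm1 (fun j => x j - y j) by move=> k'; apply: (Rabs_le_norm1 (fun j => x j - y j)).
have Hn := norm1_ge0 (fun j => x j - y j).
rewrite Rmult_assoc.
apply: (affine_comb_lipschitz (g0 := fun y => f y (vzero m) k) (g := fun i y => f y (unitv i) k)) => //.
- apply: Rle_trans (H0 x y Hx Hy _ Hd k) _. rewrite Rmult_1_r. apply: Rmult_le_compat_r => //; lra.
- move=> i. apply: Rle_trans (Hm i x y Hx Hy _ Hd k) _. rewrite Rmult_1_r. apply: Rmult_le_compat_r => //; lra.
Qed.

Lemma f_unit_diff_bound (p : R -> vec n) :
  cont_path T p -> exists Mf, 0 <= Mf /\ forall t, 0 <= t <= T -> forall (i : 'I_m) k,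
    Rabs (f (p t) (unitv i) k - f (p t) (vzero m) k) <= Mf.
Proof.
move=> Hp; have HT : 0 <= T by have := T_gt0 Hreg; lra.
have [M [HM HM2]] : exists M, 0 <= M /\ forall i k t, 0 <= t <= T ->
    Rabs (f (p t) (unitv i) k - f (p t) (vzero m) k) <= M.
  apply: finite_uniform_bound2 => [i k M M' H HMM t Ht | i k].
    by apply: Rle_trans (H t Ht) HMM.
  have [M [_ HM]] := cont_bounded_on_path HT
    (cont_Rn_minus (C1_Rn_cont (C1_fi Hreg i k)) (C1_Rn_cont (C1_f0 Hreg k))) Hp.
  by exists M.
by exists M; split => // t Ht i k; exact: HM2.
Qed.

Lemma hat_traj_lipschitz (ab : vec m) (y0 : R -> vec n) :
  in_box ab -> sol ab y0 ->
  exists C, 0 <= C /\ forall b y, in_box b -> sol b y ->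
    forall t, 0 <= t <= T -> norm1 (fun k => y t k - y0 t k) <= C * norm1 (fun i => b i - ab i).
Proof.
move=> Hab Hy0. have HT : 0 <= T by have := T_gt0 Hreg; lra.
have Hp := deriv_within_cont_path (solves_deriv Hy0).
have [Mf [HMf HMf2]] := f_unit_diff_bound Hp.
have [L [HL HL2]] := fhat_lipschitz.
set K := INR n * L. set Mb := INR n * Mf.
have Hn := pos_INR n.
have HK : 0 <= K by rewrite /K; apply: Rmult_le_pos.
have HMb : 0 <= Mb by rewrite /Mb; apply: Rmult_le_pos.
exists (Mb * T * exp (K * T)); split.
  apply: Rmult_le_pos; [apply: Rmult_le_pos => // | left; apply: exp_pos].
move=> b y Hb Hy t Ht.
have Hnb := norm1_ge0 (fun i => b i - ab i).
have := @gronwall n T (fun s k => y s k - y0 s k)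
  (fun s k => fhat f (y s) b k + (-1) * fhat f (y0 s) ab k) K 0 (Mb * norm1 (fun i => b i - ab i))
  HT HK (Rle_refl 0) ltac:(apply: Rmult_le_pos => //).
have -> : Mb * T * exp (K * T) * norm1 (fun i => b i - ab i) = (0 + Mb * norm1 (fun i => b i - ab i) * T) * exp (K * T) by ring.
apply => //.
- move=> s Hs k /=.
  have -> : (fun s0 => y s0 k - y0 s0 k) = (fun s0 => y s0 k + (-1) * y0 s0 k)
    by apply: functional_extensionality => s0; ring.
  refine (deriv_within_lin (-1) _ _).
  exact (solves_deriv Hy Hs k). exact (solves_deriv Hy0 Hs k).
- move=> s Hs.
  rewrite /K /Mb.
  have -> : INR n * L * norm1 (fun k => y s k - y0 s k) + INR n * Mf * norm1 (fun i => b i - ab i)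
          = sumI (fun _ : 'I_n => L * norm1 (fun k => y s k - y0 s k) + Mf * norm1 (fun i => b i - ab i)).
    rewrite sumI_const; ring.
  apply: sumI_le => k /=.
  have E : fhat f (y s) b k + (-1) * fhat f (y0 s) ab k =
           (fhat f (y s) b k - fhat f (y0 s) b k) + (fhat f (y0 s) b k - fhat f (y0 s) ab k) by ring.
  rewrite E. apply: Rle_trans (Rabs_triang _ _) _. apply: Rplus_le_compat.
  + apply: HL2 => //; [exact: (solves_X Hy Hs) | exact: (solves_X Hy0 Hs)].
  + apply: (affine_comb_sub_bound (g0 := fun z => f z (vzero m) k) (g := fun i z => f z (unitv i) k)).
    move=> i; exact: HMf2.
- have -> : (fun k => y 0 k - y0 0 k) = (fun k => 0).
    apply: functional_extensionality => k. by rewrite (proj1 Hy) (proj1 Hy0) Rminus_diag.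
  rewrite /norm1 (sumI_ext (G := fun _ => 0)) ?sumI0; [lra | move=> k; exact: Rabs_R0].
Qed.

Lemma hat_traj_dir_lipschitz (ab : vec m) (y0 : R -> vec n) :
  in_box ab -> sol ab y0 ->
  exists C, 0 <= C /\ forall (v : vec m) e y, admissible ab v -> 0 <= e <= 1 ->
    sol (fun i => ab i + e * v i) y ->
    forall t, 0 <= t <= T -> norm1 (fun k => y t k - y0 t k) <= C * norm1 v * e.
Proof.
move=> Hab Hy0; have [C [HC HCy]] := hat_traj_lipschitz Hab Hy0.
exists C; split => // v e y Hv He Hy t Ht.
by rewrite Rmult_assoc (Rmult_comm _ e) -(norm1_dir ab); [exact: HCy (Hv e He) Hy t Ht | lra].
Qed.

Lemma hat_traj_dir2_close (ab u w : vec m) (y0 : R -> vec n) :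
  in_box ab -> admissible ab u -> admissible ab w -> admissible ab (fun i => u i + w i) ->
  sol ab y0 ->
  exists S, 0 <= S /\ forall e y1 y2 y3, 0 <= e <= 1 ->
    sol (fun i => ab i + e * (u i + w i)) y1 -> sol (fun i => ab i + e * u i) y2 ->
    sol (fun i => ab i + e * w i) y3 -> forall t, 0 <= t <= T ->
    [/\ norm1 (fun k => y1 t k - y0 t k) <= S * e, norm1 (fun k => y2 t k - y0 t k) <= S * e
      & norm1 (fun k => y3 t k - y0 t k) <= S * e].
Proof.
move=> Hab Hu Hw Huw Hy0.
have [C [HC Hdist]] := hat_traj_dir_lipschitz Hab Hy0.
have Hnu := norm1_ge0 u; have Hnw := norm1_ge0 w; have Hnuw := norm1_ge0 (fun i => u i + w i).
exists (C * (norm1 u + norm1 w + norm1 (fun i => u i + w i))); split.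
  by apply: Rmult_le_pos => //; lra.
move=> e y1 y2 y3 He Hy1 Hy2 Hy3 t Ht.
have Hle : forall v : vec m, 0 <= norm1 v <= norm1 u + norm1 w + norm1 (fun i => u i + w i) ->
    C * norm1 v * e <= C * (norm1 u + norm1 w + norm1 (fun i => u i + w i)) * e.
  by move=> v Hv; apply: Rmult_le_compat_r; [lra | apply: Rmult_le_compat_l => //; lra].
split.
- by apply: Rle_trans (Hdist _ _ _ Huw He Hy1 t Ht) (Hle _ _); lra.
- by apply: Rle_trans (Hdist _ _ _ Hu He Hy2 t Ht) (Hle _ _); lra.
- by apply: Rle_trans (Hdist _ _ _ Hw He Hy3 t Ht) (Hle _ _); lra.
Qed.

Lemma hat_traj_second_difference (ab u w : vec m) (y0 : R -> vec n) :
  in_box ab -> admissible ab u -> admissible ab w -> admissible ab (fun i => u i + w i) ->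
  sol ab y0 ->
  forall eta, 0 < eta -> exists e0, 0 < e0 /\ forall e, 0 < e <= e0 -> forall y1 y2 y3,
    sol (fun i => ab i + e * (u i + w i)) y1 -> sol (fun i => ab i + e * u i) y2 ->
    sol (fun i => ab i + e * w i) y3 ->
    forall t, 0 <= t <= T -> norm1 (fun k => y1 t k - y2 t k - y3 t k + y0 t k) <= eta * e.
Proof.
move=> Hab Hu Hw Huw Hy0 eta Heta.
have HT : 0 <= T by have := T_gt0 Hreg; lra.
have Hp := deriv_within_cont_path (solves_deriv Hy0).
have [S [HS Hclose]] := hat_traj_dir2_close Hab Hu Hw Huw Hy0.
have [M [Lf [HM [HLf HSD]]]] := affine_family_second_difference_near_path
  (g0 := fun k y => f y (vzero m) k) (g := fun k i y => f y (unitv i) k) ab u w HT Hp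
  (C1_f0 Hreg) (fun k i => C1_fi Hreg i k).
have Hn := pos_INR n.
set K := INR n * (M + 1).
have HK : 0 <= K by apply: Rmult_le_pos => //; lra.
set E := INR n * S * T * exp (K * T).
have HE : 0 <= E.
  by apply: Rmult_le_pos; [do 2 apply: Rmult_le_pos => // | left; apply: exp_pos].
have [eta1 [Heta1 [Heta11 [Heta12 _]]]] := pos_min3 Rlt_0_1
  (ltac:(apply: Rdiv_lt_0_compat; lra) : 0 < eta / (4 * (E + 1))) Rlt_0_1.
have [rho [Hrho HSD']] := HSD eta1 Heta1.
have [e0 [He0 [He01 [He02 He03]]]] := pos_min3 Rlt_0_1
  (ltac:(apply: Rdiv_lt_0_compat; lra) : 0 < rho / (S + 1))
  (ltac:(apply: Rdiv_lt_0_compat; nra) : 0 < eta / (8 * (Lf * E + 1))).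
exists e0; split => // e He y1 y2 y3 Hy1 Hy2 Hy3.
have He1 : 0 <= e <= 1 by lra.
have HSe : S * e <= rho.
  have : e * (S + 1) <= rho by apply: Rmult_le_of_le_div; lra.
  nra.
have D1 : forall t, 0 <= t <= T -> norm1 (fun k => y1 t k - y0 t k) <= S * e.
  by move=> t Ht; case: (Hclose e y1 y2 y3 He1 Hy1 Hy2 Hy3 t Ht).
have D2 : forall t, 0 <= t <= T -> norm1 (fun k => y2 t k - y0 t k) <= S * e.
  by move=> t Ht; case: (Hclose e y1 y2 y3 He1 Hy1 Hy2 Hy3 t Ht).
have D3 : forall t, 0 <= t <= T -> norm1 (fun k => y3 t k - y0 t k) <= S * e.
  by move=> t Ht; case: (Hclose e y1 y2 y3 He1 Hy1 Hy2 Hy3 t Ht).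
pose Dv s k := y1 s k + -1 * y2 s k + -1 * y3 s k + 1 * y0 s k.
have HDv : forall t, 0 <= t <= T -> norm1 (Dv t) <= e * E * (2 * eta1 + 4 * Lf * e).
  have Hb : 0 <= INR n * (2 * eta1 * (S * e) + 4 * Lf * (S * e) * e).
    have HSe0 : 0 <= S * e by apply: Rmult_le_pos; lra.
    apply: Rmult_le_pos => //; apply: Rplus_le_le_0_compat; first by nra.
    by repeat apply: Rmult_le_pos; lra.
  move=> t Ht; rewrite (_ : e * E * _ = (0 + INR n * (2 * eta1 * (S * e) + 4 * Lf * (S * e) * e) * T)
      * exp (K * T)); last by rewrite /E; ring.
  apply: (gronwall (G := fun s k => fhat f (y1 s) (fun i => ab i + e * (u i + w i)) k
      + -1 * fhat f (y2 s) (fun i => ab i + e * u i) k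
      + -1 * fhat f (y3 s) (fun i => ab i + e * w i) k + 1 * fhat f (y0 s) ab k))
    => //; first lra.
  - move=> s Hs k; apply: (deriv_within_lin 1 _ (solves_deriv Hy0 Hs k)).
    apply: (deriv_within_lin (-1) _ (solves_deriv Hy3 Hs k)).
    exact: (deriv_within_lin (-1) (solves_deriv Hy1 Hs k) (solves_deriv Hy2 Hs k)).
  - move=> s Hs; rewrite /K (_ : INR n * (M + 1) * _ + _ = sumI (fun _ : 'I_n =>
        (M + 1) * norm1 (Dv s) + 2 * eta1 * (S * e) + 4 * Lf * (S * e) * e)); last first.
      by rewrite sumI_const; ring.
    apply: sumI_le => k /=.
    rewrite (_ : forall A B C D : R, A + -1 * B + -1 * C + 1 * D = A - B - C + D); last by move=> *; ring.
    have near : forall y, (forall t, 0 <= t <= T -> norm1 (fun k => y t k - y0 t k) <= S * e) ->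
        close rho (y s) (y0 s) by move=> y Hy; apply: close_of_norm1; have := Hy s Hs; lra.
    apply: Rle_trans (HSD' k s Hs (y1 s) (y2 s) (y3 s) (near _ D1) (near _ D2) (near _ D3) e
      ltac:(lra)) _.
    rewrite (norm1_ext (u := fun j => y1 s j - y2 s j - y3 s j + y0 s j) (v := Dv s)); last first.
      by move=> j; rewrite /Dv; ring.
    have D12 := norm1_sub_triang (y1 s) (y2 s) (y0 s).
    have D13 := norm1_sub_triang (y1 s) (y3 s) (y0 s).
    have := D1 s Hs; have := D2 s Hs; have := D3 s Hs => ? ? ?.
    have : (M + eta1) * norm1 (Dv s) <= (M + 1) * norm1 (Dv s).
      by apply: Rmult_le_compat_r; [exact: norm1_ge0 | lra].
    have : 2 * eta1 * norm1 (fun j => y2 s j - y0 s j) <= 2 * eta1 * (S * e).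
      by apply: Rmult_le_compat_l; lra.
    have : e * Lf * (norm1 (fun j => y1 s j - y2 s j) + norm1 (fun j => y1 s j - y3 s j))
        <= e * Lf * (4 * (S * e)).
      by apply: Rmult_le_compat_l; [apply: Rmult_le_pos; lra | lra].
    lra.
  - rewrite /Dv (proj1 Hy1) (proj1 Hy2) (proj1 Hy3) (proj1 Hy0).
    by rewrite (norm1_ext (v := vzero n)) /norm1 ?(sumI_ext (G := fun _ => 0)) ?sumI0;
      [lra | move=> k; exact: Rabs_R0 | move=> k; rewrite /vzero; ring].
move=> t Ht; rewrite (norm1_ext (v := Dv t)); last by move=> k; rewrite /Dv; ring.
apply: Rle_trans (HDv t Ht) _.
have : 2 * eta1 * E <= eta / 2.
  have := Rmult_le_compat_r E _ _ HE Heta12.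
  rewrite (_ : eta / (4 * (E + 1)) * E = eta / 4 - eta / 4 / (E + 1)); last by field; lra.
  have : 0 < eta / 4 / (E + 1) by apply: Rdiv_lt_0_compat; lra.
  lra.
have : 4 * Lf * e * E <= eta / 2.
  have := Rmult_le_compat_r (Lf * E) _ _ ltac:(nra) He03.
  rewrite (_ : eta / (8 * (Lf * E + 1)) * (Lf * E) = eta / 8 - eta / 8 / (Lf * E + 1)); last first.
    by field; nra.
  have : 0 < eta / 8 / (Lf * E + 1) by apply: Rdiv_lt_0_compat; nra.
  have : e * (Lf * E) <= e0 * (Lf * E) by apply: Rmult_le_compat_r; nra.
  lra.
move=> H1 H2.
have := Rmult_le_compat_l e _ _ ltac:(lra) H1; have := Rmult_le_compat_l e _ _ ltac:(lra) H2.
lra.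
Qed.

Lemma Jhat_along_ex b y :
  sol b y -> exists v, Jhat_along T r q b y v.
Proof.
move=> Hy. have HT : 0 <= T by have := T_gt0 Hreg; lra.
have [I HI] := is_RInt_cont_on HT (cont_on_comp (C1_Rn_cont (C1_rhat b (C1_r0 Hreg) (C1_ri Hreg)))
  (deriv_within_cont_path (solves_deriv Hy))).
exists (I + q (y T)), I; split => //.
Qed.

Lemma hat_sol_eq b y1 y2 :
  in_box b -> sol b y1 -> sol b y2 ->
  forall t, 0 <= t <= T -> y1 t = y2 t.
Proof.
move=> Hb H1 H2 t Ht. apply: functional_extensionality => k.
exact: (proj2 (sol_hat Hreg Hb) y1 y2 H1 H2 t Ht k).
Qed.

Lemma Jhat_along_uniq b y1 y2 v1 v2 :
  in_box b -> sol b y1 -> sol b y2 ->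
  Jhat_along T r q b y1 v1 -> Jhat_along T r q b y2 v2 -> v1 = v2.
Proof.
move=> Hb H1 H2 [I1 [HI1 ->]] [I2 [HI2 ->]].
have HT : 0 <= T by have := T_gt0 Hreg; lra.
have E := hat_sol_eq Hb H1 H2.
have HI1' : is_RInt (fun t => rhat r (y2 t) b) 0 T I1.
  apply: (is_RInt_ext HT HI1) => t Ht. by rewrite E.
rewrite (is_RInt_unique HI1' HI2) E //; lra.
Qed.

Lemma Jhat_uniq b v1 v2 :
  in_box b -> Jh b v1 -> Jh b v2 -> v1 = v2.
Proof.
move=> Hb [y1 [H1 J1]] [y2 [H2 J2]]. exact: (Jhat_along_uniq Hb H1 H2 J1 J2).
Qed.

Lemma Jhat_ex b :
  in_box b -> exists v, Jh b v.
Proof.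
move=> Hb. have [[y Hy] _] := sol_hat Hreg Hb. have [v Hv] := Jhat_along_ex Hy. by exists v, y.
Qed.

Lemma Jhat_lipschitz_dir (ab u : vec m) :
  in_box ab -> admissible ab u ->
  exists C e0, 0 < e0 /\ forall e, 0 < e <= e0 -> forall v v0,
    Jh (fun i => ab i + e * u i) v -> Jh ab v0 -> Rabs (v - v0) <= C * e.
Proof.
move=> Hab Hu; have HT : 0 <= T by have := T_gt0 Hreg; lra.
have [[y0 Hy0] _] := sol_hat Hreg Hab.
have Hp := deriv_within_cont_path (solves_deriv Hy0).
have [C [HC Hdist]] := hat_traj_dir_lipschitz Hab Hy0.
set A := C * norm1 u.
have HA : 0 <= A by apply: Rmult_le_pos => //; exact: norm1_ge0.
pose P y := rhat r y ab.
pose Pu y := rhat r y (fun i => ab i + u i).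
have C1P : forall b, C1_Rn (fun y => rhat r y b).
  by move=> b; apply: C1_rhat; [exact: C1_r0 Hreg | exact: C1_ri Hreg].
have [rho1 [L1 [Hr1 [HL1 LN1]]]] := C1_family_lipschitz_near_path (N := 1) HT Hp (fun _ => C1P ab).
have [rho2 [L2 [Hr2 [HL2 LN2]]]] :=
  C1_family_lipschitz_near_path (N := 1) HT Hp (fun _ => C1P (fun i => ab i + u i)).
have [rho3 [L3 [Hr3 [HL3 LN3]]]] := C1_family_lipschitz_near_path (N := 1)
  HT (cont_path_const (T := T) (y0 T)) (fun _ => C1_q Hreg).
have [Bd [HBd HBd2]] :=
  cont_bounded_on_path HT (cont_Rn_minus (C1_Rn_cont (C1P (fun i => ab i + u i))) (C1_Rn_cont (C1P ab))) Hp.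
have [rho [Hr [Hr1' [Hr2' Hr3']]]] := pos_min3 Hr1 Hr2 Hr3.
have [e0 [He0 [He01 [_ He02]]]] := pos_min3 Rlt_0_1 Rlt_0_1
  (ltac:(apply: Rdiv_lt_0_compat; lra) : 0 < rho / (A + 1)).
set Cin := L1 * A + Bd + (L1 + L2) * A.
exists (T * Cin + L3 * A), e0; split => // e He v v0 [y [Hy [I [HI ->]]]] Jv0.
have He1 : 0 <= e <= 1 by lra.
have HeA : A * e <= rho.
  have : e * (A + 1) <= rho by apply: Rmult_le_of_le_div; lra.
  nra.
have [v0' [I0 [HI0 Ev0]]] := Jhat_along_ex Hy0.
rewrite (Jhat_uniq Hab Jv0 (ex_intro _ y0 (conj Hy0 (ex_intro _ I0 (conj HI0 Ev0))))) Ev0.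
have Hd : forall t, 0 <= t <= T -> norm1 (fun k => y t k - y0 t k) <= A * e.
  by move=> t Ht; rewrite /A; exact: Hdist _ _ _ Hu He1 Hy t Ht.
have Hcl : forall t, 0 <= t <= T -> forall r', rho <= r' -> close r' (y t) (y0 t).
  by move=> t Ht r' Hr'; apply: close_of_norm1; have := Hd t Ht; lra.
have Hcl0 : forall r' t, 0 < r' -> close r' (y0 t) (y0 t) by move=> r' t Hr'; apply: close_refl; lra.
have Hint : Rabs (I + -1 * I0) <= Cin * e * T.
  apply: (is_RInt_bound HT (is_RInt_lin (-1) HT HI HI0)) => t Ht.
  rewrite rhat_dir; change (Rabs (P (y t) + e * (Pu (y t) - P (y t)) + -1 * P (y0 t)) <= Cin * e).
  have E1 : Rabs (P (y t) - P (y0 t)) <= L1 * norm1 (fun j => y t j - y0 t j).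
    exact: LN1 ord0 t Ht (y0 t) (y t) (Hcl0 _ t Hr1) (Hcl t Ht _ Hr1').
  have E2 : Rabs (Pu (y t) - Pu (y0 t)) <= L2 * norm1 (fun j => y t j - y0 t j).
    exact: LN2 ord0 t Ht (y0 t) (y t) (Hcl0 _ t Hr2) (Hcl t Ht _ Hr2').
  have E3 : Rabs (Pu (y0 t) - P (y0 t)) <= Bd := HBd2 t Ht.
  have Hdt := Hd t Ht.
  have Hn1 : L1 * norm1 (fun j => y t j - y0 t j) <= L1 * (A * e) by apply: Rmult_le_compat_l.
  have Hn2 : L2 * norm1 (fun j => y t j - y0 t j) <= L2 * (A * e) by apply: Rmult_le_compat_l.
  have Hbr : Rabs (Pu (y t) - P (y t)) <= Bd + (L1 + L2) * A.
    rewrite (_ : Pu (y t) - P (y t) =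
      (Pu (y0 t) - P (y0 t)) + (Pu (y t) - Pu (y0 t)) - (P (y t) - P (y0 t))); last ring.
    apply: Rle_trans (Rabs_triang _ _) _; rewrite Rabs_Ropp.
    apply: Rle_trans (Rplus_le_compat_r _ _ _ (Rabs_triang _ _)) _.
    have : A * e <= A * 1 by apply: Rmult_le_compat_l; lra.
    nra.
  rewrite (_ : P (y t) + e * (Pu (y t) - P (y t)) + -1 * P (y0 t) =
    (P (y t) - P (y0 t)) + e * (Pu (y t) - P (y t))); last ring.
  apply: Rle_trans (Rabs_triang _ _) _; rewrite Rabs_mult (Rabs_right e); last lra.
  have : e * Rabs (Pu (y t) - P (y t)) <= e * (Bd + (L1 + L2) * A) by apply: Rmult_le_compat_l; lra.
  rewrite /Cin; nra.
have Hq : Rabs (q (y T) - q (y0 T)) <= L3 * (A * e).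
  have HTT : 0 <= T <= T by lra.
  apply: Rle_trans (LN3 ord0 T HTT (y0 T) (y T) (Hcl0 _ _ Hr3) (Hcl T HTT _ Hr3')) _.
  by apply: Rmult_le_compat_l => //; exact: Hd.
rewrite (_ : I + q (y T) - (I0 + q (y0 T)) = (I + -1 * I0) + (q (y T) - q (y0 T))); last ring.
apply: Rle_trans (Rabs_triang _ _) _.
rewrite (_ : (T * Cin + L3 * A) * e = Cin * e * T + L3 * (A * e)); last ring.
lra.
Qed.

Lemma Jhat_second_difference (ab u w : vec m) :
  in_box ab -> admissible ab u -> admissible ab w -> admissible ab (fun i => u i + w i) ->
  forall eta, 0 < eta -> exists e0, 0 < e0 /\ forall e, 0 < e <= e0 -> forall v1 v2 v3 v0,
    Jh (fun i => ab i + e * (u i + w i)) v1 -> Jh (fun i => ab i + e * u i) v2 ->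
    Jh (fun i => ab i + e * w i) v3 -> Jh ab v0 ->
    Rabs (v1 - v2 - v3 + v0) <= eta * e.
Proof.
move=> Hab Hu Hw Huw eta Heta.
have HT : 0 <= T by have := T_gt0 Hreg; lra.
have [[y0 Hy0] _] := sol_hat Hreg Hab.
have Hp := deriv_within_cont_path (solves_deriv Hy0).
have [S [HS Hclose]] := hat_traj_dir2_close Hab Hu Hw Huw Hy0.
have [Mr [Lr [HMr [HLr HSDr]]]] := affine_family_second_difference_near_path (N := 1)
  (g0 := fun _ y => r y (vzero m)) (g := fun _ i y => r y (unitv i)) ab u w HT Hp
  (fun _ => C1_r0 Hreg) (fun _ i => C1_ri Hreg i).
have [Mq [HMq HSDq]] := C1_family_second_difference_near_path (N := 1) (g := fun _ => q)
  HT (cont_path_const (T := T) (y0 T)) (fun _ => C1_q Hreg).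
set A := (Mr + 1) * T + (Mq + 1).
set B := 2 * S * (T + 1).
set C := 4 * Lr * S * T.
have HA : 0 <= A by rewrite /A; nra.
have HB : 0 <= B by rewrite /B; nra.
have HC : 0 <= C by rewrite /C; repeat apply: Rmult_le_pos; lra.
set etat := eta / (3 * (A + 1)).
have Hetat : 0 < etat by apply: Rdiv_lt_0_compat; lra.
have HetatA : etat * A <= eta / 3.
  have : etat * (3 * (A + 1)) <= eta by apply: Rmult_le_of_le_div; [lra | exact: Rle_refl].
  lra.
have [eta1 [Heta1 [Heta11 [Heta12 _]]]] := pos_min3 Rlt_0_1
  (ltac:(apply: Rdiv_lt_0_compat; lra) : 0 < eta / (3 * (B + 1))) Rlt_0_1.
have Heta1B : eta1 * B <= eta / 3.
  have : eta1 * (3 * (B + 1)) <= eta by apply: Rmult_le_of_le_div; lra.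
  lra.
have [rr [Hrr HSDr']] := HSDr eta1 Heta1.
have [rq [Hrq HSDq']] := HSDq eta1 Heta1.
have [et [Het Htraj]] := hat_traj_second_difference Hab Hu Hw Huw Hy0 Hetat.
have [rho [Hrho [Hrho1 [Hrho2 _]]]] := pos_min3 Hrr Hrq Rlt_0_1.
have [e1 [He1 [He11 [He12 He13]]]] := pos_min3 Rlt_0_1
  (ltac:(apply: Rdiv_lt_0_compat; lra) : 0 < rho / (S + 1))
  (ltac:(apply: Rdiv_lt_0_compat; lra) : 0 < eta / (3 * (C + 1))).
have [e0 [He0 [He01 [He02 _]]]] := pos_min3 He1 Het Rlt_0_1.
exists e0; split => // e He v1 v2 v3 v0 J1 J2 J3 J0.
have He1' : 0 <= e <= 1 by lra.
have HSe : S * e <= rho.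
  have : e * (S + 1) <= rho by apply: Rmult_le_of_le_div; lra.
  nra.
have HeC : e * C <= eta / 3.
  have : e * (3 * (C + 1)) <= eta by apply: Rmult_le_of_le_div; lra.
  lra.
have [y1 [Hy1 [I1 [HI1 ->]]]] := J1.
have [y2 [Hy2 [I2 [HI2 ->]]]] := J2.
have [y3 [Hy3 [I3 [HI3 ->]]]] := J3.
have [v0' [I0 [HI0 Ev0]]] := Jhat_along_ex Hy0.
rewrite (Jhat_uniq Hab J0 (ex_intro _ y0 (conj Hy0 (ex_intro _ I0 (conj HI0 Ev0))))) Ev0.
have Hdv : forall t, 0 <= t <= T -> norm1 (fun k => y1 t k - y2 t k - y3 t k + y0 t k) <= etat * e.
  by apply: Htraj => //; lra.
have Hnear : forall t, 0 <= t <= T -> forall r', rho <= r' ->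
    [/\ close r' (y1 t) (y0 t), close r' (y2 t) (y0 t) & close r' (y3 t) (y0 t)].
  move=> t Ht r' Hr; case: (Hclose e y1 y2 y3 He1' Hy1 Hy2 Hy3 t Ht) => D1 D2 D3.
  by split; apply: close_of_norm1; lra.
have Hint : Rabs (I1 + -1 * I2 + -1 * I3 + 1 * I0) <= e * ((Mr + 1) * etat + 2 * eta1 * S + 4 * Lr * S * e) * T.
  apply: (is_RInt_bound HT (is_RInt_lin 1 HT (is_RInt_lin (-1) HT (is_RInt_lin (-1) HT HI1 HI2) HI3) HI0)).
  move=> s Hs /=.
  rewrite (_ : forall A B C D : R, A + -1 * B + -1 * C + 1 * D = A - B - C + D); last by move=> *; ring.
  case: (Hnear s Hs rr Hrho1) => N1 N2 N3.
  apply: Rle_trans (HSDr' ord0 s Hs (y1 s) (y2 s) (y3 s) N1 N2 N3 e ltac:(lra)) _.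
  case: (Hclose e y1 y2 y3 He1' Hy1 Hy2 Hy3 s Hs) => D1 D2 D3.
  have D12 := norm1_sub_triang (y1 s) (y2 s) (y0 s).
  have D13 := norm1_sub_triang (y1 s) (y3 s) (y0 s).
  have := Hdv s Hs => Hd.
  have : (Mr + eta1) * norm1 (fun j => y1 s j - y2 s j - y3 s j + y0 s j) <= (Mr + 1) * (etat * e).
    by apply: Rmult_le_compat; [lra | exact: norm1_ge0 | lra | exact: Hd].
  have : 2 * eta1 * norm1 (fun j => y2 s j - y0 s j) <= 2 * eta1 * (S * e).
    by apply: Rmult_le_compat_l; lra.
  have : e * Lr * (norm1 (fun j => y1 s j - y2 s j) + norm1 (fun j => y1 s j - y3 s j))
      <= e * Lr * (4 * (S * e)).
    by apply: Rmult_le_compat_l; [apply: Rmult_le_pos; lra | lra].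
  lra.
have Hq : Rabs (q (y1 T) - q (y2 T) - q (y3 T) + q (y0 T)) <= e * ((Mq + 1) * etat + 2 * eta1 * S).
  have HTT : 0 <= T <= T by lra.
  case: (Hnear T HTT rq Hrho2) => N1 N2 N3.
  apply: Rle_trans (HSDq' ord0 T HTT (y1 T) (y2 T) (y3 T) N1 N2 N3) _.
  case: (Hclose e y1 y2 y3 He1' Hy1 Hy2 Hy3 T HTT) => _ D2 _.
  have : (Mq + eta1) * norm1 (fun j => y1 T j - y2 T j - y3 T j + y0 T j) <= (Mq + 1) * (etat * e).
    by apply: Rmult_le_compat; [lra | exact: norm1_ge0 | lra | exact: Hdv].
  have : 2 * eta1 * norm1 (fun j => y2 T j - y0 T j) <= 2 * eta1 * (S * e).
    by apply: Rmult_le_compat_l; lra.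
  lra.
have Htot : (Mr + 1) * etat * T + 2 * eta1 * S * T + 4 * Lr * S * e * T + ((Mq + 1) * etat + 2 * eta1 * S)
    <= eta.
  have : 2 * eta1 * S * T + 2 * eta1 * S = eta1 * B by rewrite /B; ring.
  have : 4 * Lr * S * e * T = e * C by rewrite /C; ring.
  have : (Mr + 1) * etat * T + (Mq + 1) * etat = etat * A by rewrite /A; ring.
  lra.
rewrite (_ : I1 + q (y1 T) - (I2 + q (y2 T)) - (I3 + q (y3 T)) + (I0 + q (y0 T)) =
  (I1 + -1 * I2 + -1 * I3 + 1 * I0) + (q (y1 T) - q (y2 T) - q (y3 T) + q (y0 T))); last ring.
apply: Rle_trans (Rabs_triang _ _) _.
have := Rmult_le_compat_l e _ _ ltac:(lra) Htot.
lra.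
Qed.

(** * Concavity and the nonstandard derivative *)

Definition has_dir_deriv (ab u : vec m) (v0 L : R) :=
  forall eta, 0 < eta -> exists d, 0 < d /\ forall e, 0 < e <= 1 -> e < d -> forall v,
    Jh (fun i => ab i + e * u i) v -> Rabs ((v - v0) / e - L) < eta.

Hypothesis Hconc : Jhat_concave X T x0 f r q.

Lemma Jhat_quotient_antitone (ab u : vec m) v0 e1 e2 w1 w2 :
  in_box ab -> admissible ab u -> Jh ab v0 ->
  0 < e1 <= e2 -> e2 <= 1 ->
  Jh (fun i => ab i + e1 * u i) w1 -> Jh (fun i => ab i + e2 * u i) w2 ->
  (w2 - v0) / e2 <= (w1 - v0) / e1.
Proof.
move=> Hab Hu J0 He1 He2 J1 J2.
set lam := e1 / e2.
have Hlam : 0 <= lam <= 1.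
  rewrite /lam; split; first by left; apply: Rdiv_lt_0_compat; lra.
  have -> : 1 = e2 / e2 by field; lra. apply: Rmult_le_compat_r; [left; apply: Rinv_0_lt_compat|]; lra.
have Ev : vadd (vscale lam (fun i => ab i + e2 * u i)) (vscale (1 - lam) ab) = (fun i => ab i + e1 * u i).
  apply: functional_extensionality => i. rewrite /vadd /vscale /lam. field. lra.
have := @Hconc _ _ lam (Hu e2 ltac:(lra)) Hab Hlam _ _ _ J2 J0 (eq_ind_r (fun z => Jh z w1) J1 Ev).
move=> Hle.
have : e1 / e2 * (w2 - v0) <= w1 - v0 by rewrite /lam in Hle; lra.
move=> H2.
have E1 : (w2 - v0) / e2 = / e1 * (e1 / e2 * (w2 - v0)) by field; lra.
rewrite E1 /Rdiv (Rmult_comm (w1 - v0)). apply: Rmult_le_compat_l => //.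
left; apply: Rinv_0_lt_compat; lra.
Qed.

(* By concavity the difference quotients decrease with e and, by the Lipschitz estimate,
   are bounded above; their supremum is the derivative. *)
Lemma has_dir_deriv_ex (ab u : vec m) v0 :
  in_box ab -> admissible ab u -> Jh ab v0 ->
  exists L, has_dir_deriv ab u v0 L.
Proof.
move=> Hab Hu J0.
pose E := fun z => exists e v, 0 < e <= 1 /\ Jh (fun i => ab i + e * u i) v /\ z = (v - v0) / e.
have [C [e0 [He0 HC]]] := Jhat_lipschitz_dir Hab Hu.
have [e1 [He1 [He1a [_ He1b]]]] := pos_min3 Rlt_0_1 Rlt_0_1 He0.
have [w1 Jw1] := Jhat_ex (Hu e1 ltac:(lra)).
have Hbnd : forall z, E z -> z <= C.
  move=> z [e [v [He [Jv ->]]]].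
  case: (Rle_lt_dec e e1) => Hee.
  - have := HC e ltac:(lra) v v0 Jv J0. move=> /Rabs_le_between [_ ?].
    apply: (Rmult_le_reg_r e); first lra. rewrite /Rdiv Rmult_assoc Rinv_l; lra.
  - apply: Rle_trans (Jhat_quotient_antitone Hab Hu J0 (conj He1 (Rlt_le _ _ Hee)) (proj2 He) Jw1 Jv) _.
    have := HC e1 ltac:(lra) w1 v0 Jw1 J0. move=> /Rabs_le_between [_ ?].
    apply: (Rmult_le_reg_r e1); first lra. rewrite /Rdiv Rmult_assoc Rinv_l; lra.
have [v1 Jv1] := Jhat_ex (Hu 1 ltac:(lra)).
have HE1 : E ((v1 - v0) / 1) by exists 1, v1; split; [lra | split].
have [L HL] := completeness E (ex_intro _ C Hbnd) (ex_intro _ _ HE1).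
exists L => eta Heta.
have [z [[e' [v' [He' [Jv' ->]]]] Hz]] := lub_approx HL (r := L - eta) ltac:(lra).
exists e'; split; first lra.
move=> e He Hee' v Jv.
have H1 : (v' - v0) / e' <= (v - v0) / e :=
  Jhat_quotient_antitone Hab Hu J0 (conj (proj1 He) (Rlt_le _ _ Hee')) (proj2 He') Jv Jv'.
have H2 : (v - v0) / e <= L by apply: (proj1 HL); exists e, v; split.
apply: Rabs_def1; lra.
Qed.

Lemma has_dir_deriv_ub (ab u : vec m) v0 L :
  in_box ab -> admissible ab u -> Jh ab v0 ->
  has_dir_deriv ab u v0 L ->
  forall e v, 0 < e <= 1 -> Jh (fun i => ab i + e * u i) v -> (v - v0) / e <= L.
Proof.
move=> Hab Hu J0 HL e v He Jv.
apply: Rnot_lt_le => Hlt.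
set g := (v - v0) / e - L.
have [d [Hd Hd2]] := HL g ltac:(rewrite /g; lra).
have [e' [He' [He'1 [He'2 He'3]]]] := pos_min3 (ltac:(lra) : 0 < e) (ltac:(lra) : 0 < d / 2) Rlt_0_1.
have [v' Jv'] := Jhat_ex (Hu e' ltac:(lra)).
have A := Hd2 e' ltac:(lra) ltac:(lra) v' Jv'.
have B := Jhat_quotient_antitone Hab Hu J0 (conj He' He'1) (proj2 He) Jv' Jv.
move: A => /Rabs_def2 [A1 A2]. rewrite /g in A1 A2. lra.
Qed.

Lemma has_dir_deriv_add (ab u w : vec m) v0 Lu Lw Luw :
  in_box ab -> admissible ab u -> admissible ab w -> admissible ab (fun i => u i + w i) -> Jh ab v0 ->
  has_dir_deriv ab u v0 Lu -> has_dir_deriv ab w v0 Lw ->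
  has_dir_deriv ab (fun i => u i + w i) v0 Luw -> Luw = Lu + Lw.
Proof.
move=> Hab Hu Hw Huw J0 HLu HLw HLuw. apply: NNPP => Hne.
set g := Rabs (Luw - (Lu + Lw)) / 8.
have Hg : 0 < g by rewrite /g; have := Rabs_pos_lt (Luw - (Lu + Lw)) ltac:(lra); lra.
have [d1 [Hd1 H1]] := HLu g Hg. have [d2 [Hd2 H2]] := HLw g Hg. have [d3 [Hd3 H3]] := HLuw g Hg.
have [e0 [He0 HK2]] := Jhat_second_difference Hab Hu Hw Huw Hg.
have [da [Hda [Hda1 [Hda2 Hda3]]]] := pos_min3 Hd1 Hd2 Hd3.
have [e [He [He1 [He2 He3]]]] := pos_min3 (ltac:(lra) : 0 < da / 2) He0 Rlt_0_1.
have [v1 J1] := Jhat_ex (Huw e ltac:(lra)).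
have [v2 J2] := Jhat_ex (Hu e ltac:(lra)).
have [v3 J3] := Jhat_ex (Hw e ltac:(lra)).
have A1 := H3 e ltac:(lra) ltac:(lra) v1 J1.
have A2 := H1 e ltac:(lra) ltac:(lra) v2 J2.
have A3 := H2 e ltac:(lra) ltac:(lra) v3 J3.
have A4 := HK2 e ltac:(lra) v1 v2 v3 v0 J1 J2 J3 J0.
have A5 : Rabs ((v1 - v2 - v3 + v0) / e) <= g.
  rewrite /Rdiv Rabs_mult Rabs_inv (Rabs_right e); last lra.
  apply: (Rmult_le_reg_r e); first lra. rewrite Rmult_assoc Rinv_l; lra.
have E : Luw - (Lu + Lw) = - ((v1 - v0) / e - Luw) + ((v2 - v0) / e - Lu) + ((v3 - v0) / e - Lw)
    + (v1 - v2 - v3 + v0) / e by field; lra.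
have : Rabs (Luw - (Lu + Lw)) <= 4 * g.
  rewrite E. apply: Rle_trans (Rabs_triang _ _) _. apply: Rle_trans (Rplus_le_compat_r _ _ _ (Rabs_triang _ _)) _.
  apply: Rle_trans (Rplus_le_compat_r _ _ _ (Rplus_le_compat_r _ _ _ (Rabs_triang _ _))) _.
  rewrite Rabs_Ropp. lra.
rewrite /g. have := Rabs_pos_lt (Luw - (Lu + Lw)) ltac:(lra). lra.
Qed.

Lemma has_dir_deriv0 (ab : vec m) v0 :
  in_box ab -> Jh ab v0 -> has_dir_deriv ab (fun _ => 0) v0 0.
Proof.
move=> Hab J0 eta Heta. exists 1; split; first lra.
move=> e He He1 v Jv.
have Ev : (fun i => ab i + e * 0) = ab by apply: functional_extensionality => i; ring.
rewrite Ev in Jv. rewrite (Jhat_uniq Hab Jv J0).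
have -> : (v0 - v0) / e - 0 = 0 by field; lra.
rewrite Rabs_R0; lra.
Qed.

Lemma has_dir_deriv_sum (ab w : vec m) v0 (D : vec m) :
  in_box ab -> in_box (fun i => ab i + w i) -> Jh ab v0 ->
  (forall i, has_dir_deriv ab (scal_unit i (w i)) v0 (D i)) ->
  has_dir_deriv ab w v0 (sumI D).
Proof.
move=> Hab Hw J0 HD.
have Hadm : forall z, (forall i, z i = 0 \/ z i = w i) -> admissible ab z.
  by move=> z; apply: admissible_sub.
suff Hpre : forall k, (k <= m)%N ->
    has_dir_deriv ab (stair (vzero m) w k) v0 (sumI (fun i : 'I_m => if (i < k)%N then D i else 0)).
  have := Hpre m (leqnn m).
  have -> : stair (vzero m) w m = w by apply: functional_extensionality => i; rewrite /stair ltn_ord.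
  by rewrite (sumI_ext (G := D)) // => i; rewrite ltn_ord.
elim=> [|k IH] Hk.
  rewrite (sumI_ext (G := fun _ => 0)) // sumI0; exact: has_dir_deriv0.
set i0 : 'I_m := Ordinal Hk.
have Hstep : stair (vzero m) w k.+1 = vadd (stair (vzero m) w k) (scal_unit i0 (w i0)).
  by rewrite (stair_step (vzero m) w i0) /vzero Rminus_0_r.
have Hstair : forall j, (forall i, stair (vzero m) w j i = 0 \/ stair (vzero m) w j i = w i).
  by move=> j i; rewrite /stair; case: (i < j)%N; [right | left].
have Hunit : forall i, scal_unit i0 (w i0) i = 0 \/ scal_unit i0 (w i0) i = w i.
  by move=> i; rewrite /scal_unit; case: eqP => [->|_]; [right | left].
have Hnext : admissible ab (vadd (stair (vzero m) w k) (scal_unit i0 (w i0))).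
  by rewrite -Hstep; exact: Hadm _ (Hstair _).
have [L HL] := has_dir_deriv_ex Hab Hnext J0.
rewrite Hstep (sumI_prefix_step D i0) -(has_dir_deriv_add Hab (Hadm _ (Hstair k)) (Hadm _ Hunit)
  Hnext J0 (IH (ltnW Hk)) (HD i0) HL); exact: HL.
Qed.

Hypothesis HAddf : f_additive X f.
Hypothesis HAddr : r_additive X r.

Lemma DNS_comp_of_has_dir_deriv (ab : vec m) i v0 L :
  is_binary ab -> Jh ab v0 -> has_dir_deriv ab (scal_unit i (1 - 2 * ab i)) v0 L ->
  DNS_comp X T x0 f r q ab i ((1 - 2 * ab i) * L).
Proof.
move=> Hab J0 HL.
have HT : 0 <= T by have := T_gt0 Hreg; lra.
have Habox := binary_in_box Hab.
have Hquot : forall b, (forall k, b k = ab k + scal_unit i (1 - 2 * ab i) k) ->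
    forall eta, 0 < eta -> exists delta, 0 < delta /\ forall eps, 0 < eps -> eps <= 1 -> eps < delta ->
      forall ve v0', Jeps X T x0 f r q ab b eps ve -> Jval X T x0 f r q ab v0' ->
      Rabs ((ve - v0') / eps - L) < eta.
  move=> b Eb eta Heta; have [d [Hd Hd2]] := HL eta Heta.
  exists d; split => // eps He0 He1 Hed ve v0' Je Jv.
  rewrite (Jhat_uniq Habox (Jval_Jhat HAddf HAddr HT Hab Jv) J0).
  have Hb : is_binary b.
    by rewrite (functional_extensionality _ _ Eb); exact: binary_flip.
  apply: (Hd2 eps (conj He0 He1) Hed).
  have -> : (fun k => ab k + eps * scal_unit i (1 - 2 * ab i) k) = (fun k => (1 - eps) * ab k + eps * b k).
    by apply: functional_extensionality => k; rewrite Eb; ring.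
  exact: Jeps_Jhat HAddf HAddr HT Hab Hb Je.
split => Habi.
- have -> : (1 - 2 * ab i) * L = L by rewrite Habi; ring.
  apply: Hquot => k; rewrite /vadd /unitv /scal_unit; case: eqP => [->|_]; last ring.
  by rewrite Habi; ring.
- move=> eta Heta.
  have [d [Hd Hd2]] : exists delta, 0 < delta /\ forall eps, 0 < eps -> eps <= 1 -> eps < delta ->
      forall ve v0', Jeps X T x0 f r q ab (vsub ab (unitv i)) eps ve -> Jval X T x0 f r q ab v0' ->
      Rabs ((ve - v0') / eps - L) < eta.
    apply: Hquot => // k; rewrite /vsub /unitv /scal_unit; case: eqP => [->|_]; last ring.
    by rewrite Habi; ring.
  exists d; split => // eps He0 He1 Hed ve v0' Je Jv.
  have -> : (v0' - ve) / eps - (1 - 2 * ab i) * L = - ((ve - v0') / eps - L).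
    by rewrite Habi; field; lra.
  by rewrite Rabs_Ropp; exact: Hd2.
Qed.

Lemma DNS_supergradient (ab : vec m) : is_binary ab ->
  exists d : vec m,
    (forall i, DNS_comp X T x0 f r q ab i (d i)) /\
    forall a, is_binary a -> forall va vab,
      Jval X T x0 f r q a va -> Jval X T x0 f r q ab vab -> va - vab <= dotv d (vsub a ab).
Proof.
move=> Hab.
have HT : 0 <= T by have := T_gt0 Hreg; lra.
have Habox := binary_in_box Hab.
have [v0 J0] := Jhat_ex Habox.
pose s i := 1 - 2 * ab i.
have HL : forall i, exists L, has_dir_deriv ab (scal_unit i (s i)) v0 L.
  move=> i; apply: has_dir_deriv_ex J0 => //.
  exact: admissible_of (binary_in_box (binary_flip i Hab)).
pose L i := proj1_sig (constructive_indefinite_description _ (HL i)).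
have HLi : forall i, has_dir_deriv ab (scal_unit i (s i)) v0 (L i).
  by move=> i; rewrite /L; case: constructive_indefinite_description.
exists (fun i => s i * L i); split => [i | a Ha va vab Ja Jab].
  exact: DNS_comp_of_has_dir_deriv Hab J0 (HLi i).
rewrite (Jhat_uniq Habox (Jval_Jhat HAddf HAddr HT Hab Jab) J0).
(* Each coordinate of [a - ab] is 0 or [s i], so [a - ab] is a sum of steps along the edges from [ab]. *)
have Hcoord : forall i, has_dir_deriv ab (scal_unit i (vsub a ab i)) v0 (s i * L i * vsub a ab i).
  move=> i.
  have [->|->] : vsub a ab i = 0 \/ vsub a ab i = s i.
    by rewrite /vsub /s; case: (Ha i) => ->; case: (Hab i) => ->; [left | right | right | left]; ring.
  - by rewrite scal_unit0 Rmult_0_r; exact: has_dir_deriv0.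
  - have -> : s i * L i * s i = L i by rewrite /s; case: (Hab i) => ->; ring.
    exact: HLi.
have Hbox : in_box (fun i => ab i + vsub a ab i).
  by move=> i; rewrite /vsub Rplus_minus; exact: binary_in_box.
have HD := has_dir_deriv_sum Habox Hbox J0 Hcoord.
have Ja' : Jh (fun i => ab i + 1 * vsub a ab i) va.
  suff -> : (fun i => ab i + 1 * vsub a ab i) = a by exact: Jval_Jhat HAddf HAddr HT Ha Ja.
  by apply: functional_extensionality => i; rewrite /vsub; ring.
have := has_dir_deriv_ub Habox (admissible_of Habox Hbox) J0 HD (conj Rlt_0_1 (Rle_refl 1)) Ja'.
by rewrite Rdiv_1_r.
Qed.

End AffineReformulation.

Theorem theorem3 (n m : nat) (T : R) (X : vec n -> Prop) (x0 : vec n)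
  (f : vec n -> vec m -> vec n) (r : vec n -> vec m -> R) (q : vec n -> R)
  (HT : 0 < T) (Hx0 : X x0)
  (* standing assumption: the relevant state equations have unique solutions on [0,T] *)
  (Hsol_x : forall b, is_binary b -> ex_uniq_sol X T x0 (fun y : vec n => f y b))
  (Hsol_eps : forall ab a eps, is_binary ab -> is_binary a -> 0 <= eps <= 1 ->
      ex_uniq_sol X T x0 (fmix f ab a eps))
  (Hsol_y : forall a, in_box a -> ex_uniq_sol X T x0 (fun y : vec n => fhat f y a))
  (* (A1) *)
  (HA1 : forall a, is_binary a -> C2v_Rn (fun x : vec n => f x a) /\ lipschitz_on X (fun x : vec n => f x a))
  (* (A3) *)
  (HA3r : forall a, is_binary a -> C1_Rn (fun x : vec n => r x a))
  (HA3q : C1_Rn q)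
  (* (Add) *)
  (HAddf : forall x a, X x -> is_binary a -> forall k,
      f x a k = f x (vzero m) k + sumI (fun i => f x (scal_unit i (a i)) k - f x (vzero m) k))
  (HAddr : forall x a, X x -> is_binary a ->
      r x a = r x (vzero m) + sumI (fun i => r x (scal_unit i (a i)) - r x (vzero m)))
  (* concavity of hat J on [0,1]^m *)
  (Hconc : Jhat_concave X T x0 f r q) :
  forall ab, is_binary ab ->
    exists d : vec m,
      (forall i, DNS_comp X T x0 f r q ab i (d i)) /\
      forall a, is_binary a -> forall va vab,
        Jval X T x0 f r q a va -> Jval X T x0 f r q ab vab ->
        va - vab <= dotv d (vsub a ab).
(* [Hx0], [Hsol_x] and [Hsol_eps] are not needed: the payoff values are given with their
   trajectories, which by (Add) solve the reformulated equations, and uniqueness there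
   ([Hsol_y]) is all that is used. *)
Proof.
move=> ab Hab.
have Hreg : regular_data T X x0 f r q.
  split => //.
  - by move=> k; apply: C2_Rn_C1; exact: (proj1 (HA1 _ (@binary_vzero m)) k).
  - by move=> i k; apply: C2_Rn_C1; exact: (proj1 (HA1 _ (binary_unitv i)) k).
  - exact: (proj2 (HA1 _ (@binary_vzero m))).
  - by move=> i; exact: (proj2 (HA1 _ (binary_unitv i))).
  - exact: HA3r (@binary_vzero m).
  - by move=> i; exact: HA3r (binary_unitv i).
exact: DNS_supergradient Hreg Hconc HAddf HAddr ab Hab.
Qed.
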